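(* Let $X$ be a real Banach space, $f\in\Gamma_0(X)$, $S_f\ne\emptyset$. Then $$\inf\{\varepsilon>0\mid \mathrm{Er}\{\mathrm{Ptb}^w(f,\varepsilon)\}=0\}\le\inf\{\varepsilon>0\mid \mathrm{Er}\{\mathrm{Ptb}^w_l(f,\varepsilon)\}=0\}\le|\partial f|_{\rm bd}$$ and $$|\partial f|_{\rm bd}\le\inf\{\varepsilon>0\mid \mathrm{Er}\{\mathrm{Ptb}(f,\varepsilon)\}=0\}\le\inf\{\varepsilon>0\mid \mathrm{Er}\{\mathrm{Ptb}_l(f,\varepsilon)\}=0\}.$$
   Context: $X^*$ is the dual, $\mathbb{B}^*$ its closed unit ball. $\Gamma_0(X)$: proper convex lsc extended-real-valued functions on $X$. For convex $f$, $\partial f(x):=\{x^*\in X^*\mid \langle x^*,u-x\rangle\le f(u)-f(x)\ \forall u\in X\}$. $d(x,S)=\inf_{u\in S}\|u-x\|$, $d(x,\emptyset)=+\infty$, $\inf\emptyset=+\infty$. $S_f:=\{x\mid f(x)\le0\}$, $S_f^=:=\{x\mid f(x)=0\}$. Global error bound modulus: $\mathrm{Er}\,f:=\inf_{f(x)>0}\frac{f(x)}{d(x,S_f)}$. $|\partial f|_{\rm bd}:=\inf_{f(x)=0} d(0,\mathrm{bd}\,\partial f(x))$ (boundary in norm topology of $X^*$). For $x\in S_f^=$, $\varepsilon,\delta\ge0$: $\tau(f,x,\varepsilon,\delta):=\inf_{u:\,f(u)\ge-\varepsilon\|u-x\|-\delta} d(0,\partial f(u))$ if $0\notin\mathrm{int}\,\partial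 f(x)$, and $:=d(0,\mathrm{bd}\,\partial f(x))$ if $0\in\mathrm{int}\,\partial f(x)$. For $\varepsilon\ge0$: $g$ is an $\varepsilon$-perturbation of $f$ ($g\in\mathrm{Ptb}(f,\varepsilon)$) if $S_g\ne\emptyset$, $g=f+p$ with $p:X\to\mathbb{R}$ convex, and there exist $x\in S_f^=$ and $\xi\ge0$ such that $\xi+|\partial f|_{\rm bd}-\tau(f,x,\xi,|p(x)|)\le\varepsilon$ and $|p(u)-p(x)|\le\xi\|u-x\|$ for all $u\in X$. $g$ is a weak $\varepsilon$-perturbation ($g\in\mathrm{Ptb}^w(f,\varepsilon)$) if $S_g\ne\emptyset$, $g=f+p$ with $p:X\to\mathbb{R}$ convex, and there is $x\in S_f^=$ with $|p(u)-p(x)|\le\varepsilon\|u-x\|$ for all $u\in X$. $\mathrm{Ptb}_l(f,\varepsilon):=\{g\mid g(u)-f(u)=\langle x^*,u-x\rangle\ \forall u,\ \text{for some } x\in S_f^=,\ \xi\ge0,\ x^*\in\xi\mathbb{B}^*\text{ with }\xi+|\partial f|_{\rm bd}-\tau(f,x,\xi,0)\le\varepsilon\}$; $\mathrm{Ptb}^w_l(f,\varepsilon):=\{g\mid g(u)-f(u)=\langle x^*,u-x\rangle\ \forall u,\ \text{for some } x\in S_f^=,\ x^*\in\varepsilon\mathbb{B}^*\}$. For each family $\mathcal{F}$ among these, $\mathrm{Er}\{\mathcal{F}\}:=\inf_{g\in\mathcal{F}}\mathrm{Er}\,g$. *)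

From Stdlib Require Import Reals Lra ClassicalEpsilon.
Open Scope R_scope.

Inductive Rbar : Type := Fin (r : R) | PInf | MInf.

Definition Rbar_le (a b : Rbar) : Prop :=
  match a, b with
  | MInf, _ => True
  | _, PInf => True
  | Fin x, Fin y => x <= y
  | _, _ => False
  end.

Definition Rbar_lt (a b : Rbar) : Prop := Rbar_le a b /\ a <> b.

Definition Rbar_plus_R (a : Rbar) (r : R) : Rbar :=
  match a with Fin x => Fin (x + r) | PInf => PInf | MInf => MInf end.

Definition is_glb (A : Rbar -> Prop) (m : Rbar) : Prop :=
  (forall a, A a -> Rbar_le m a) /\
  (forall m', (forall a, A a -> Rbar_le m' a) -> Rbar_le m' m).

(* infimum in [-oo,+oo]; inf of the empty set is +oo *)
Definition Rbar_inf (A : Rbar -> Prop) : Rbar :=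
  epsilon (inhabits PInf) (is_glb A).

(* "a - b <= e" for a, b in [0,+oo]: with a - (+oo) = -oo for finite a,
   and (+oo) - (+oo) undefined (the inequality is then regarded as false). *)
Definition Rbar_diff_le (a b : Rbar) (e : R) : Prop :=
  match b with
  | Fin y => Rbar_le a (Fin (e + y))
  | PInf => a <> PInf
  | MInf => False
  end.

Definition Rbar_ratio (a d : Rbar) : Rbar :=
  match a with
  | PInf => PInf
  | MInf => MInf
  | Fin x => match d with Fin y => Fin (x / y) | _ => Fin 0 end
  end.

Record Banach : Type := {
  bcar :> Type;
  bzero : bcar;
  badd : bcar -> bcar -> bcar;
  bopp : bcar -> bcar;
  bscal : R -> bcar -> bcar;
  bnorm : bcar -> R;
  badd_assoc : forall x y z, badd x (badd y z) = badd (badd x y) z;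
  badd_comm : forall x y, badd x y = badd y x;
  badd_0l : forall x, badd bzero x = x;
  badd_oppl : forall x, badd (bopp x) x = bzero;
  bscal_assoc : forall a b x, bscal a (bscal b x) = bscal (a * b) x;
  bscal_1 : forall x, bscal 1 x = x;
  bscal_distr_l : forall a x y, bscal a (badd x y) = badd (bscal a x) (bscal a y);
  bscal_distr_r : forall a b x, bscal (a + b) x = badd (bscal a x) (bscal b x);
  bnorm_nonneg : forall x, 0 <= bnorm x;
  bnorm_eq0 : forall x, bnorm x = 0 -> x = bzero;
  bnorm_scal : forall a x, bnorm (bscal a x) = Rabs a * bnorm x;
  bnorm_triangle : forall x y, bnorm (badd x y) <= bnorm x + bnorm y;
  bcomplete : forall s : nat -> bcar,
    (forall e, 0 < e -> exists N, forall m n, (N <= m)%nat -> (N <= n)%nat ->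
        bnorm (badd (s m) (bopp (s n))) < e) ->
    exists l, forall e, 0 < e -> exists N, forall n, (N <= n)%nat ->
        bnorm (badd (s n) (bopp l)) < e
}.

Arguments bzero {_}.
Arguments badd {_}.
Arguments bopp {_}.
Arguments bscal {_}.
Arguments bnorm {_}.

Section Defs.
Variable X : Banach.

Definition bsub (x y : X) : X := badd x (bopp y).

Definition is_dual (phi : X -> R) : Prop :=
  (forall x y, phi (badd x y) = phi x + phi y) /\
  (forall a x, phi (bscal a x) = a * phi x) /\
  (exists M, forall x, Rabs (phi x) <= M * bnorm x).

Definition dnorm (phi : X -> R) : Rbar :=
  Rbar_inf (fun m => exists M, m = Fin M /\ 0 <= M /\
                      forall x, Rabs (phi x) <= M * bnorm x).

Definition dzero : X -> R := fun _ => 0.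
Definition dsub (phi psi : X -> R) : X -> R := fun x => phi x - psi x.

(* subsets of X^* are predicates on functionals (only duals count) *)
Definition d_int (S : (X -> R) -> Prop) (phi : X -> R) : Prop :=
  is_dual phi /\ exists r, 0 < r /\
    forall psi, is_dual psi -> Rbar_lt (dnorm (dsub psi phi)) (Fin r) -> S psi.

Definition d_cl (S : (X -> R) -> Prop) (phi : X -> R) : Prop :=
  is_dual phi /\ forall r, 0 < r ->
    exists psi, is_dual psi /\ S psi /\ Rbar_lt (dnorm (dsub psi phi)) (Fin r).

Definition d_bd (S : (X -> R) -> Prop) (phi : X -> R) : Prop :=
  d_cl S phi /\ ~ d_int S phi.

Definition dist0 (S : (X -> R) -> Prop) : Rbar :=
  Rbar_inf (fun m => exists phi, is_dual phi /\ S phi /\ m = dnorm phi).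

Definition dist (x : X) (S : X -> Prop) : Rbar :=
  Rbar_inf (fun m => exists u, S u /\ m = Fin (bnorm (bsub u x))).

Definition proper (f : X -> Rbar) : Prop :=
  (forall x, f x <> MInf) /\ exists x, f x <> PInf.

Definition convex_fun (f : X -> Rbar) : Prop :=
  forall x y t a b, 0 <= t <= 1 -> f x = Fin a -> f y = Fin b ->
    Rbar_le (f (badd (bscal t x) (bscal (1 - t) y))) (Fin (t * a + (1 - t) * b)).

Definition lsc (f : X -> Rbar) : Prop :=
  forall x c, Rbar_lt (Fin c) (f x) ->
    exists d, 0 < d /\ forall u, bnorm (bsub u x) < d -> Rbar_lt (Fin c) (f u).

Definition Gamma0 (f : X -> Rbar) : Prop := proper f /\ convex_fun f /\ lsc f.

Definition convex_real (p : X -> R) : Prop :=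
  forall x y t, 0 <= t <= 1 ->
    p (badd (bscal t x) (bscal (1 - t) y)) <= t * p x + (1 - t) * p y.

(* subdifferential; empty where f is not finite *)
Definition subdiff (f : X -> Rbar) (x : X) (phi : X -> R) : Prop :=
  is_dual phi /\ exists a, f x = Fin a /\
    forall u, Rbar_le (Fin (a + phi (bsub u x))) (f u).

Definition Sf (f : X -> Rbar) (x : X) : Prop := Rbar_le (f x) (Fin 0).
Definition Sfeq (f : X -> Rbar) (x : X) : Prop := f x = Fin 0.

Definition Er (f : X -> Rbar) : Rbar :=
  Rbar_inf (fun v => exists x, Rbar_lt (Fin 0) (f x) /\
                               v = Rbar_ratio (f x) (dist x (Sf f))).

Definition bd_mod (f : X -> Rbar) : Rbar :=
  Rbar_inf (fun v => exists x, f x = Fin 0 /\ v = dist0 (d_bd (subdiff f x))).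

Definition tau (f : X -> Rbar) (x : X) (eps del : R) : Rbar :=
  if excluded_middle_informative (d_int (subdiff f x) dzero)
  then dist0 (d_bd (subdiff f x))
  else Rbar_inf (fun v => exists u,
          Rbar_le (Fin (- eps * bnorm (bsub u x) - del)) (f u) /\
          v = dist0 (subdiff f u)).

Definition Ptb (f : X -> Rbar) (eps : R) (g : X -> Rbar) : Prop :=
  (exists u, Sf g u) /\
  exists p : X -> R, convex_real p /\ (forall u, g u = Rbar_plus_R (f u) (p u)) /\
  exists x xi, Sfeq f x /\ 0 <= xi /\
    Rbar_diff_le (Rbar_plus_R (bd_mod f) xi) (tau f x xi (Rabs (p x))) eps /\
    forall u, Rabs (p u - p x) <= xi * bnorm (bsub u x).

Definition Ptbw (f : X -> Rbar) (eps : R) (g : X -> Rbar) : Prop :=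
  (exists u, Sf g u) /\
  exists p : X -> R, convex_real p /\ (forall u, g u = Rbar_plus_R (f u) (p u)) /\
  exists x, Sfeq f x /\
    forall u, Rabs (p u - p x) <= eps * bnorm (bsub u x).

Definition Ptbl (f : X -> Rbar) (eps : R) (g : X -> Rbar) : Prop :=
  exists x xi xs, Sfeq f x /\ 0 <= xi /\ is_dual xs /\ Rbar_le (dnorm xs) (Fin xi) /\
    Rbar_diff_le (Rbar_plus_R (bd_mod f) xi) (tau f x xi 0) eps /\
    forall u, g u = Rbar_plus_R (f u) (xs (bsub u x)).

Definition Ptbwl (f : X -> Rbar) (eps : R) (g : X -> Rbar) : Prop :=
  exists x xs, Sfeq f x /\ is_dual xs /\ Rbar_le (dnorm xs) (Fin eps) /\
    forall u, g u = Rbar_plus_R (f u) (xs (bsub u x)).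

Definition ErFam (F : (X -> Rbar) -> Prop) : Rbar :=
  Rbar_inf (fun v => exists g, F g /\ v = Er g).

Definition thr (F : R -> (X -> Rbar) -> Prop) : Rbar :=
  Rbar_inf (fun v => exists e, 0 < e /\ ErFam (F e) = Fin 0 /\ v = Fin e).

End Defs.

(* Linear perturbations are perturbations, which gives the two outer
   inequalities.

   Upper bound by the boundary modulus: a point [xst] of the boundary of the
   subdifferential at [x] is approximated both by a subgradient [psi] and by a
   non-subgradient [yst]; tilting [f] by the functional [yst - 2 psi], whose norm
   is close to that of [xst], produces a linear perturbation with arbitrarily
   small error bound modulus.

   Lower bound by the boundary modulus: let [g = f + p] be an [e]-perturbation
   with [e] below the boundary modulus [b]. If [0] is interior to the
   subdifferential at [x], the subdifferential contains every functional of norm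
   below the boundary distance, so [f] grows linearly away from [x], and
   following segments towards [x] shows that [g] has error bound modulus at least
   [(b - e) / 2]. Otherwise, were the modulus smaller, Ekeland's principle would
   give a point of [g > 0] with small slope, and a Hahn-Banach subgradient there
   would violate the lower bound on subgradient norms built into [tau]. *)

From Pilot Require Import Defs.
From Stdlib Require Import Reals Lra Lia ClassicalEpsilon Classical FunctionalExtensionality List.
Open Scope R_scope.

(** * Extended reals and infima *)

Lemma Rabs_sub_triang a b : Rabs (a - b) <= Rabs a + Rabs b.
Proof. unfold Rminus. rewrite <- (Rabs_Ropp b). apply Rabs_triang. Qed.

Lemma Rbar_le_trans a b c : Rbar_le a b -> Rbar_le b c -> Rbar_le a c.
Proof. destruct a, b, c; simpl; auto; try lra; tauto. Qed.

Lemma Rbar_le_antisym a b : Rbar_le a b -> Rbar_le b a -> a = b.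
Proof. destruct a, b; simpl; try tauto; intros; f_equal; lra. Qed.

Lemma Rbar_lt_le_trans a b c : Rbar_lt a b -> Rbar_le b c -> Rbar_lt a c.
Proof.
  intros [H1 H2] H3. split; [eapply Rbar_le_trans; eauto|].
  intro E. subst. apply H2. now apply Rbar_le_antisym.
Qed.

Lemma Rbar_le_lt_fin a M r : Rbar_le a (Fin M) -> M < r -> Rbar_lt a (Fin r).
Proof.
  intros H1 H2. split.
  - destruct a; simpl in *; auto; lra.
  - intro E. subst. simpl in H1. lra.
Qed.

Lemma Rbar_lt_not_le a b : Rbar_lt a b -> Rbar_le b a -> False.
Proof. intros [H1 H2] H3. apply H2. now apply Rbar_le_antisym. Qed.

Lemma Rbar_le_fin_eps a m : (forall e, m < e -> Rbar_le a (Fin e)) -> Rbar_le a (Fin m).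
Proof.
  intro H. destruct a; simpl.
  - destruct (Rle_dec r m); auto. exfalso.
    specialize (H ((r + m) / 2) ltac:(lra)). simpl in H. lra.
  - specialize (H (m + 1) ltac:(lra)). simpl in H. auto.
  - auto.
Qed.

Lemma Rbar_lt_fin_gap c a :
  Rbar_lt (Fin c) a -> exists m, 0 < m /\ Rbar_lt (Fin (c + m)) a.
Proof.
  intros [H1 H2]. destruct a as [r| |]; simpl in *.
  - exists ((r - c) / 2). assert (c <> r) by (intro; subst; auto).
    split; [lra|]. split; [simpl; lra|]. intro E. inversion E. lra.
  - exists 1. split; [lra|]. split; [simpl; auto|]. discriminate.
  - tauto.
Qed.

Lemma Rbar_plus_R_fin a r s : Rbar_plus_R a r = Fin s -> a = Fin (s - r).
Proof. destruct a; simpl; intro H; inversion H. f_equal. ring. Qed.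

Lemma Rbar_diff_le_fin B T e : Rbar_diff_le (Fin B) T e -> Rbar_le (Fin (B - e)) T.
Proof. destruct T; simpl; auto. lra. Qed.

Definition is_glbR (A : R -> Prop) (m : R) :=
  (forall a, A a -> m <= a) /\ (forall m', (forall a, A a -> m' <= a) -> m' <= m).

Lemma is_glbR_exists A : (exists a, A a) -> (exists lb, forall a, A a -> lb <= a) ->
  exists m, is_glbR A m.
Proof.
  intros [a0 Ha0] [lb Hlb].
  set (E := fun y => A (- y)).
  assert (Hb : bound E).
  { exists (- lb). intros y Hy. specialize (Hlb _ Hy). lra. }
  assert (Hne : exists y, E y).
  { exists (- a0). unfold E. now rewrite Ropp_involutive. }
  destruct (completeness E Hb Hne) as [s [Hs1 Hs2]].
  exists (- s). split.
  - intros a Ha. assert (E (- a)) by (unfold E; now rewrite Ropp_involutive).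
    specialize (Hs1 _ H). lra.
  - intros m' Hm'.
    assert (s <= - m') by (apply Hs2; intros y Hy; specialize (Hm' _ Hy); lra).
    lra.
Qed.

Lemma is_glb_exists (A : Rbar -> Prop) : exists m, is_glb A m.
Proof.
  destruct (classic (A MInf)) as [HM|HM].
  { exists MInf. split; [simpl; auto|]. intros m' Hm'. now apply Hm'. }
  destruct (classic (exists r, A (Fin r))) as [[r0 Hr0]|HB].
  2:{ exists PInf. split.
      - intros [r| |] Ha; simpl; auto. apply HB; eauto.
      - intros [] _; simpl; auto. }
  destruct (classic (exists lb, forall r, A (Fin r) -> lb <= r)) as [Hlb|HU].
  - destruct (is_glbR_exists (fun r => A (Fin r)) (ex_intro _ r0 Hr0) Hlb)
      as [s [Hs1 Hs2]].
    exists (Fin s). split.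
    + intros [r| |] Ha; simpl; auto.
    + intros [r| |] Hm'; simpl; auto.
      * apply Hs2. intros r' Hr'. exact (Hm' _ Hr').
      * exact (Hm' _ Hr0).
  - exists MInf. split; [simpl; auto|].
    intros [r| |] Hm'; simpl; auto.
    + apply HU. exists r. intros r1 Hr1. exact (Hm' _ Hr1).
    + exact (Hm' _ Hr0).
Qed.

Lemma Rbar_inf_spec A : is_glb A (Rbar_inf A).
Proof. unfold Rbar_inf. apply epsilon_spec, is_glb_exists. Qed.

Lemma Rbar_inf_lb A a : A a -> Rbar_le (Rbar_inf A) a.
Proof. intro H. now apply (proj1 (Rbar_inf_spec A)). Qed.

Lemma Rbar_inf_glb A m : (forall a, A a -> Rbar_le m a) -> Rbar_le m (Rbar_inf A).
Proof. intro H. now apply (proj2 (Rbar_inf_spec A)). Qed.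

Lemma Rbar_inf_empty A : (forall a, ~ A a) -> Rbar_inf A = PInf.
Proof.
  intro H. apply Rbar_le_antisym.
  - destruct (Rbar_inf A); simpl; auto.
  - apply Rbar_inf_glb. intros a Ha. exfalso; eapply H; eauto.
Qed.

Definition Rinf (A : R -> Prop) : R := epsilon (inhabits 0) (is_glbR A).

Section Rinf.
Variable A : R -> Prop.
Hypothesis A_ne : exists a, A a.

Lemma Rinf_is_glb : (exists lb, forall a, A a -> lb <= a) -> is_glbR A (Rinf A).
Proof. intro A_lb. unfold Rinf. apply epsilon_spec, is_glbR_exists; auto. Qed.

Lemma Rinf_glb m : (forall a, A a -> m <= a) -> m <= Rinf A.
Proof. intro H. exact (proj2 (Rinf_is_glb (ex_intro _ m H)) m H). Qed.

Lemma Rinf_approx e : 0 < e -> exists a, A a /\ a < Rinf A + e.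
Proof.
  intro He. apply NNPP. intro H.
  assert (Rinf A + e <= Rinf A).
  { apply Rinf_glb. intros a Ha. apply Rnot_lt_le. intro. apply H. eauto. }
  lra.
Qed.

Lemma Rinf_lb a : (exists lb, forall a, A a -> lb <= a) -> A a -> Rinf A <= a.
Proof. intros A_lb Ha. exact (proj1 (Rinf_is_glb A_lb) a Ha). Qed.

End Rinf.

Lemma Rinf_le_sum A B c : (exists a, A a) -> (exists b, B b) ->
  (forall a b, A a -> B b -> c <= a + b) -> c <= Rinf A + Rinf B.
Proof.
  intros HA HB H.
  assert (c - Rinf B <= Rinf A); [|lra].
  apply Rinf_glb; auto. intros a Ha.
  assert (c - a <= Rinf B); [|lra].
  apply Rinf_glb; auto. intros b Hb. specialize (H a b Ha Hb). lra.
Qed.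

Lemma Rinf_le_scal A c s : (exists a, A a) -> 0 < s ->
  (forall a, A a -> c <= s * a) -> c <= s * Rinf A.
Proof.
  intros HA Hs H.
  assert (c / s <= Rinf A).
  { apply Rinf_glb; auto. intros a Ha. specialize (H a Ha).
    apply Rmult_le_reg_l with s; auto. replace (s * (c / s)) with c by (field; lra). lra. }
  apply Rmult_le_compat_l with (r := s) in H0; [|lra].
  replace (s * (c / s)) with c in H0 by (field; lra). lra.
Qed.

(** * Vector identities, norms and dual norms *)

Section VectorAlgebra.
Variable X : Banach.

Lemma badd_0r (x : X) : badd x bzero = x.
Proof. rewrite badd_comm. apply badd_0l. Qed.

Lemma badd_oppr (x : X) : badd x (bopp x) = bzero.
Proof. rewrite badd_comm. apply badd_oppl. Qed.

Lemma badd_cancel (a x y : X) : badd a x = badd a y -> x = y.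
Proof.
  intro H. rewrite <- (badd_0l X x), <- (badd_0l X y), <- (badd_oppl X a).
  rewrite <- !badd_assoc, H. reflexivity.
Qed.

Lemma bscal_0 (x : X) : bscal 0 x = bzero.
Proof.
  apply (badd_cancel (bscal 0 x)). rewrite badd_0r, <- bscal_distr_r, Rplus_0_r.
  reflexivity.
Qed.

Lemma bscal_zero (a : R) : bscal a (@bzero X) = bzero.
Proof. rewrite <- (bscal_0 bzero), bscal_assoc, Rmult_0_r. reflexivity. Qed.

Lemma bopp_scal (x : X) : bopp x = bscal (-1) x.
Proof.
  apply (badd_cancel x). rewrite badd_oppr. rewrite <- (bscal_1 X x) at 1.
  rewrite <- bscal_distr_r. replace (1 + -1) with 0 by ring. now rewrite bscal_0.
Qed.

(* Linear vector identities are decided by reflection: both sides are evaluated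
   as linear combinations of their atoms and compared coefficientwise. *)
Inductive vterm := VAtom (i : nat) | VZero | VAdd (a b : vterm) | VOpp (a : vterm)
  | VScal (r : R) (a : vterm) | VSub (a b : vterm).

Fixpoint veval (env : list X) (e : vterm) : X :=
  match e with
  | VAtom i => nth i env bzero
  | VZero => bzero
  | VAdd a b => badd (veval env a) (veval env b)
  | VOpp a => bopp (veval env a)
  | VScal r a => bscal r (veval env a)
  | VSub a b => bsub X (veval env a) (veval env b)
  end.

Fixpoint vcoef (e : vterm) (k : nat) : R :=
  match e with
  | VAtom i => if Nat.eqb k i then 1 else 0
  | VZero => 0
  | VAdd a b => vcoef a k + vcoef b k
  | VOpp a => - vcoef a k
  | VScal r a => r * vcoef a k
  | VSub a b => vcoef a k - vcoef b k
  end.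

Fixpoint lin_comb (env : list X) (c : nat -> R) (s : nat) : X :=
  match env with
  | nil => bzero
  | a :: env' => badd (bscal (c s) a) (lin_comb env' c (S s))
  end.

Lemma lin_comb_add env c1 c2 s :
  lin_comb env (fun k => c1 k + c2 k) s = badd (lin_comb env c1 s) (lin_comb env c2 s).
Proof.
  revert s; induction env as [|a env IH]; intro s; simpl.
  - now rewrite badd_0r.
  - rewrite IH, bscal_distr_r, <- !badd_assoc. f_equal.
    rewrite !badd_assoc. f_equal. apply badd_comm.
Qed.

Lemma lin_comb_scal env c r s :
  lin_comb env (fun k => r * c k) s = bscal r (lin_comb env c s).
Proof.
  revert s; induction env as [|a env IH]; intro s; simpl.
  - now rewrite bscal_zero.
  - now rewrite IH, bscal_distr_l, bscal_assoc.
Qed.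

Lemma lin_comb_ext env c1 c2 s :
  (forall k, (s <= k)%nat -> (k < s + length env)%nat -> c1 k = c2 k) ->
  lin_comb env c1 s = lin_comb env c2 s.
Proof.
  revert s; induction env as [|a env IH]; intros s H; simpl; auto.
  rewrite IH, H; simpl; auto; try lia.
  intros k Hk1 Hk2. apply H; simpl in *; lia.
Qed.

Lemma lin_comb_zero env s : lin_comb env (fun _ => 0) s = bzero.
Proof.
  revert s; induction env as [|a env IH]; intro s; simpl; auto.
  now rewrite IH, bscal_0, badd_0r.
Qed.

Lemma lin_comb_atom env i s :
  lin_comb env (fun k => if Nat.eqb k (s + i) then 1 else 0) s = nth i env bzero.
Proof.
  revert s i; induction env as [|a env IH]; intros s [|i]; simpl; auto.
  - rewrite Nat.add_0_r, Nat.eqb_refl, bscal_1.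
    rewrite (lin_comb_ext env _ (fun _ => 0)), lin_comb_zero, badd_0r; auto.
    intros k Hk _. destruct (Nat.eqb_spec k s); auto. lia.
  - rewrite <- (IH (S s) i). replace (s + S i)%nat with (S s + i)%nat by lia.
    destruct (Nat.eqb_spec s (S s + i)); [lia|].
    now rewrite bscal_0, badd_0l.
Qed.

Lemma veval_lin_comb env e : veval env e = lin_comb env (vcoef e) 0.
Proof.
  induction e; simpl.
  - exact (eq_sym (lin_comb_atom env i 0)).
  - now rewrite lin_comb_zero.
  - now rewrite IHe1, IHe2, <- lin_comb_add.
  - rewrite IHe, bopp_scal, <- lin_comb_scal. apply lin_comb_ext. intros; ring.
  - now rewrite IHe, <- lin_comb_scal.
  - unfold bsub. rewrite IHe1, IHe2, bopp_scal, <- lin_comb_scal, <- lin_comb_add.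
    apply lin_comb_ext. intros; ring.
Qed.

Fixpoint all_below (n : nat) (P : nat -> Prop) : Prop :=
  match n with O => True | S m => all_below m P /\ P m end.

Lemma all_below_spec n P : all_below n P -> forall k, (k < n)%nat -> P k.
Proof.
  induction n; simpl; intros H k Hk; [lia|].
  destruct H as [H1 H2]. destruct (Nat.eq_dec k n); [now subst|].
  apply IHn; auto. lia.
Qed.

Lemma veval_eq env e1 e2 :
  all_below (length env) (fun k => vcoef e1 k = vcoef e2 k) -> veval env e1 = veval env e2.
Proof.
  intro H. rewrite !veval_lin_comb. apply lin_comb_ext. intros k _ Hk.
  apply (all_below_spec _ _ H). simpl in Hk. lia.
Qed.

End VectorAlgebra.

Ltac vmem x l :=
  match l with
  | nil => constr:(false)
  | cons x _ => constr:(true)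
  | cons _ ?l' => vmem x l'
  end.

Ltac vcollect e l :=
  match e with
  | badd ?a ?b => let l1 := vcollect a l in vcollect b l1
  | bopp ?a => vcollect a l
  | bsub _ ?a ?b => let l1 := vcollect a l in vcollect b l1
  | bscal _ ?a => vcollect a l
  | bzero => l
  | _ => let b := vmem e l in
         match b with true => l | false => constr:(cons e l) end
  end.

Ltac vlookup x l :=
  match l with
  | cons x _ => constr:(O)
  | cons _ ?l' => let n := vlookup x l' in constr:(S n)
  end.

Ltac vreify e l :=
  match e with
  | badd ?a ?b => let ra := vreify a l in let rb := vreify b l in constr:(VAdd ra rb)
  | bopp ?a => let ra := vreify a l in constr:(VOpp ra)
  | bsub _ ?a ?b => let ra := vreify a l in let rb := vreify b l in constr:(VSub ra rb)
  | bscal ?r ?a => let ra := vreify a l in constr:(VScal r ra)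
  | bzero => constr:(VZero)
  | _ => let n := vlookup e l in constr:(VAtom n)
  end.

Ltac vec_eq :=
  match goal with
  | |- @eq (bcar ?X) ?lhs ?rhs =>
    let l0 := constr:(@nil (bcar X)) in
    let l1 := vcollect lhs l0 in
    let l := vcollect rhs l1 in
    let r1 := vreify lhs l in
    let r2 := vreify rhs l in
    change (veval X l r1 = veval X l r2); apply veval_eq; simpl;
    repeat split; ring
  end.

Section Norms.
Variable X : Banach.
Notation bsub := (bsub X).

Lemma bnorm_zero : bnorm (@bzero X) = 0.
Proof. rewrite <- (bscal_0 X bzero), bnorm_scal, Rabs_R0. ring. Qed.

Lemma bnorm_opp (x : X) : bnorm (bopp x) = bnorm x.
Proof.
  rewrite bopp_scal, bnorm_scal, Rabs_left by lra. ring.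
Qed.

Lemma bnorm_scal_nonneg (a : R) (x : X) : 0 <= a -> bnorm (bscal a x) = a * bnorm x.
Proof. intro H. now rewrite bnorm_scal, Rabs_pos_eq. Qed.

Lemma bnorm_sub_sym (x y : X) : bnorm (bsub x y) = bnorm (bsub y x).
Proof. replace (bsub x y) with (bopp (bsub y x)) by vec_eq. apply bnorm_opp. Qed.

Lemma bnorm_sub_triangle (a b c : X) :
  bnorm (bsub a c) <= bnorm (bsub a b) + bnorm (bsub b c).
Proof.
  replace (bsub a c) with (badd (bsub a b) (bsub b c)) by vec_eq. apply bnorm_triangle.
Qed.

Lemma bnorm_sub_diag (x : X) : bnorm (bsub x x) = 0.
Proof. replace (bsub x x) with (@bzero X) by vec_eq. apply bnorm_zero. Qed.

Lemma bnorm_sub_eq0 (a b : X) : bnorm (bsub a b) = 0 -> a = b.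
Proof.
  intro H. apply bnorm_eq0 in H.
  replace a with (badd (bsub a b) b) by vec_eq. rewrite H. apply badd_0l.
Qed.

Definition linear (phi : X -> R) :=
  (forall x y, phi (badd x y) = phi x + phi y) /\ (forall a x, phi (bscal a x) = a * phi x).

Lemma dual_linear phi : is_dual X phi -> linear phi.
Proof. intros [H1 [H2 _]]; split; auto. Qed.

Lemma dual_of_bound phi L :
  linear phi -> (forall x, Rabs (phi x) <= L * bnorm x) -> is_dual X phi.
Proof. intros [H1 H2] H3. split; [|split]; eauto. Qed.

Section Linear.
Variable phi : X -> R.
Hypothesis Hphi : linear phi.

Lemma linear_add x y : phi (badd x y) = phi x + phi y.
Proof. apply Hphi. Qed.

Lemma linear_scal a x : phi (bscal a x) = a * phi x.
Proof. apply Hphi. Qed.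

Lemma linear_zero : phi bzero = 0.
Proof. rewrite <- (bscal_0 X bzero), linear_scal. ring. Qed.

Lemma linear_opp x : phi (bopp x) = - phi x.
Proof. rewrite bopp_scal, linear_scal. ring. Qed.

Lemma linear_sub x y : phi (bsub x y) = phi x - phi y.
Proof. unfold Defs.bsub. rewrite linear_add, linear_opp. ring. Qed.

Lemma linear_abs_le L : (forall y, phi y <= L * bnorm y) ->
  forall y, Rabs (phi y) <= L * bnorm y.
Proof.
  intros H y. apply Rabs_le. split; auto.
  pose proof (H (bopp y)). rewrite linear_opp, bnorm_opp in H0. lra.
Qed.

End Linear.

Lemma dnorm_le phi M : 0 <= M -> (forall x, Rabs (phi x) <= M * bnorm x) ->
  Rbar_le (dnorm X phi) (Fin M).
Proof. intros H1 H2. apply Rbar_inf_lb. exists M. auto. Qed.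

Lemma dnorm_ge0 phi : Rbar_le (Fin 0) (dnorm X phi).
Proof. apply Rbar_inf_glb. intros a [M [-> [HM _]]]. exact HM. Qed.

Lemma dnorm_fin phi : is_dual X phi ->
  exists m, dnorm X phi = Fin m /\ 0 <= m /\ forall x, Rabs (phi x) <= m * bnorm x.
Proof.
  intro Hd. destruct Hd as [Ha [Hs [M HM]]].
  assert (HM' : forall x, Rabs (phi x) <= Rmax M 0 * bnorm x).
  { intro x. eapply Rle_trans; [apply HM|].
    apply Rmult_le_compat_r; [apply bnorm_nonneg | apply Rmax_l]. }
  pose proof (dnorm_le phi _ (Rmax_r M 0) HM') as H1.
  pose proof (dnorm_ge0 phi) as H0.
  destruct (dnorm X phi) as [m| |] eqn:E; simpl in H1, H0; try tauto.
  exists m. split; auto. split; auto.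
  intro x. destruct (Req_dec (bnorm x) 0) as [Hz|Hz].
  - apply bnorm_eq0 in Hz. subst.
    rewrite (linear_zero phi (conj Ha Hs)), bnorm_zero, Rabs_R0. lra.
  - pose proof (bnorm_nonneg X x).
    assert (Hq : Rbar_le (Fin (Rabs (phi x) / bnorm x)) (dnorm X phi)).
    { apply Rbar_inf_glb. intros a [M' [-> [_ HM2]]]. simpl.
      apply Rmult_le_reg_r with (bnorm x); [lra|].
      replace (Rabs (phi x) / bnorm x * bnorm x) with (Rabs (phi x)) by (field; lra).
      apply HM2. }
    rewrite E in Hq. simpl in Hq.
    apply (Rmult_le_compat_r (bnorm x)) in Hq; [|lra].
    replace (Rabs (phi x) / bnorm x * bnorm x) with (Rabs (phi x)) in Hq by (field; lra).
    exact Hq.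
Qed.

Lemma dnorm_lt_fin phi r : is_dual X phi -> Rbar_lt (dnorm X phi) (Fin r) ->
  exists m, m < r /\ 0 <= m /\ forall v, Rabs (phi v) <= m * bnorm v.
Proof.
  intros Hd [Hl Hne]. destruct (dnorm_fin phi Hd) as [m [Em [Hm B]]].
  rewrite Em in Hl, Hne. simpl in Hl. exists m. split; auto.
  destruct Hl; auto. subst. tauto.
Qed.

Lemma dual_comb a b phi psi : is_dual X phi -> is_dual X psi ->
  is_dual X (fun x => a * phi x + b * psi x).
Proof.
  intros Hp Hq.
  destruct (dnorm_fin phi Hp) as [m1 [_ [Hm1 B1]]].
  destruct (dnorm_fin psi Hq) as [m2 [_ [Hm2 B2]]].
  destruct Hp as [Ha1 [Hs1 _]], Hq as [Ha2 [Hs2 _]].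
  split; [|split].
  - intros. rewrite Ha1, Ha2. ring.
  - intros. rewrite Hs1, Hs2. ring.
  - exists (Rabs a * m1 + Rabs b * m2). intro x.
    eapply Rle_trans; [apply Rabs_triang|]. rewrite !Rabs_mult.
    specialize (B1 x). specialize (B2 x).
    pose proof (Rabs_pos a). pose proof (Rabs_pos b).
    assert (Rabs a * Rabs (phi x) <= Rabs a * (m1 * bnorm x)) by (apply Rmult_le_compat_l; auto).
    assert (Rabs b * Rabs (psi x) <= Rabs b * (m2 * bnorm x)) by (apply Rmult_le_compat_l; auto).
    lra.
Qed.

Lemma dual_dsub phi psi : is_dual X phi -> is_dual X psi -> is_dual X (dsub X phi psi).
Proof.
  intros Hp Hq. replace (dsub X phi psi) with (fun v => 1 * phi v + -1 * psi v).
  - now apply dual_comb.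
  - apply functional_extensionality; intro v. unfold dsub. ring.
Qed.

Lemma dual_scale t phi : is_dual X phi -> is_dual X (fun v => t * phi v).
Proof.
  intro H. replace (fun v => t * phi v) with (fun v => t * phi v + 0 * phi v).
  - now apply dual_comb.
  - apply functional_extensionality; intro; ring.
Qed.

Lemma dual_sub_scal a phi psi : is_dual X phi -> is_dual X psi ->
  is_dual X (fun v => phi v - a * psi v).
Proof.
  intros Hp Hq. replace (fun v => phi v - a * psi v) with (fun v => 1 * phi v + - a * psi v).
  - now apply dual_comb.
  - apply functional_extensionality; intro v. ring.
Qed.

Lemma dnorm_sub_scal_le chi phi psi a m d1 d2 : 0 <= m -> 0 <= d1 -> 0 <= d2 ->
  (forall v, Rabs (chi v) <= m * bnorm v) ->
  (forall v, Rabs (dsub X phi chi v) <= d1 * bnorm v) ->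
  (forall v, Rabs (dsub X psi chi v) <= d2 * bnorm v) ->
  Rbar_le (dnorm X (fun v => phi v - a * psi v))
          (Fin (Rabs (1 - a) * m + d1 + Rabs a * d2)).
Proof.
  intros Hm Hd1 Hd2 B B1 B2. apply dnorm_le.
  { pose proof (Rabs_pos a). pose proof (Rabs_pos (1 - a)). nra. }
  intro v. unfold dsub in *. specialize (B v). specialize (B1 v). specialize (B2 v).
  replace (phi v - a * psi v) with ((1 - a) * chi v + (phi v - chi v) - a * (psi v - chi v))
    by ring.
  pose proof (Rabs_sub_triang ((1 - a) * chi v + (phi v - chi v)) (a * (psi v - chi v))).
  pose proof (Rabs_triang ((1 - a) * chi v) (phi v - chi v)).
  rewrite !Rabs_mult in *.
  pose proof (Rabs_pos a). pose proof (Rabs_pos (1 - a)).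
  assert (Rabs (1 - a) * Rabs (chi v) <= Rabs (1 - a) * (m * bnorm v))
    by (apply Rmult_le_compat_l; auto).
  assert (Rabs a * Rabs (psi v - chi v) <= Rabs a * (d2 * bnorm v))
    by (apply Rmult_le_compat_l; auto).
  lra.
Qed.

Lemma dist_ge0 x S : Rbar_le (Fin 0) (Defs.dist X x S).
Proof. apply Rbar_inf_glb. intros a [u [_ ->]]. apply bnorm_nonneg. Qed.

Lemma dist_le x S u : S u -> Rbar_le (Defs.dist X x S) (Fin (bnorm (bsub u x))).
Proof. intro H. apply Rbar_inf_lb. eauto. Qed.

Lemma dist_glb x S m :
  (forall u, S u -> m <= bnorm (bsub u x)) -> Rbar_le (Fin m) (Defs.dist X x S).
Proof. intro H. apply Rbar_inf_glb. intros a [u [Hu ->]]. simpl. auto. Qed.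

Lemma dist_fin x S : (exists u, S u) ->
  exists D, Defs.dist X x S = Fin D /\ 0 <= D /\ (forall u, S u -> D <= bnorm (bsub u x)).
Proof.
  intros [u Hu]. pose proof (dist_ge0 x S). pose proof (dist_le x S u Hu).
  destruct (Defs.dist X x S) as [D| |] eqn:E; simpl in *; try tauto.
  exists D. split; auto. split; auto. intros v Hv. pose proof (dist_le x S v Hv).
  now rewrite E in H1.
Qed.

End Norms.

(** * Hahn-Banach *)

Section HahnBanach.
Variable X : Banach.
Notation bsub := (bsub X).

Definition sublinear (P : X -> R) :=
  (forall x y, P (badd x y) <= P x + P y) /\ (forall s x, 0 < s -> P (bscal s x) <= s * P x).

Lemma sublinear_zero P : sublinear P -> P bzero = 0.
Proof.
  intros [H1 H2].
  pose proof (H1 bzero bzero) as A. rewrite badd_0r in A.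
  pose proof (H2 (/2) bzero ltac:(lra)) as B. rewrite bscal_zero in B. lra.
Qed.

Lemma sublinear_scal P s x : sublinear P -> 0 < s -> P (bscal s x) = s * P x.
Proof.
  intros [H1 H2] Hs. apply Rle_antisym; auto.
  pose proof (H2 (/s) (bscal s x) ltac:(apply Rinv_0_lt_compat; auto)) as B.
  rewrite bscal_assoc, Rinv_l, bscal_1 in B by lra.
  apply Rmult_le_reg_l with (/s); [apply Rinv_0_lt_compat; auto|].
  rewrite <- Rmult_assoc, Rinv_l, Rmult_1_l by lra. exact B.
Qed.

Lemma sublinear_scal_nonneg P t x : sublinear P -> 0 <= t -> P (bscal t x) = t * P x.
Proof.
  intros HP Ht. destruct (Req_dec t 0) as [->|Ht0].
  - rewrite bscal_0, sublinear_zero by exact HP. ring.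
  - apply sublinear_scal; auto. lra.
Qed.

Lemma sublinear_opp_le P x : sublinear P -> - P (bopp x) <= P x.
Proof.
  intro HP. pose proof (sublinear_zero P HP). destruct HP as [H1 _].
  pose proof (H1 x (bopp x)). rewrite badd_oppr in H0. lra.
Qed.

Definition fle (P1 P2 : X -> R) := forall x, P1 x <= P2 x.

Lemma fle_trans P1 P2 P3 : fle P1 P2 -> fle P2 P3 -> fle P1 P3.
Proof. intros H1 H2 x. eapply Rle_trans; eauto. Qed.

Lemma fle_antisym P1 P2 : fle P1 P2 -> fle P2 P1 -> P1 = P2.
Proof. intros H1 H2. apply functional_extensionality. intro x. apply Rle_antisym; auto. Qed.

Section Tower.
Variable Q : X -> R.
Hypothesis HQ : sublinear Q.

Definition dominated (P : X -> R) := sublinear P /\ fle P Q.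

Definition minimal_dominated (P : X -> R) :=
  dominated P /\ forall P', dominated P' -> fle P' P -> fle P P'.

Lemma dominated_lb P x : dominated P -> - Q (bopp x) <= P x.
Proof.
  intros [H1 H2]. pose proof (sublinear_opp_le P x H1). specialize (H2 (bopp x)). lra.
Qed.

Definition chain (C : (X -> R) -> Prop) :=
  forall P1 P2, C P1 -> C P2 -> fle P1 P2 \/ fle P2 P1.

Definition chain_inf (C : (X -> R) -> Prop) : X -> R :=
  fun x => Rinf (fun r => exists P, C P /\ r = P x).

Section ChainInf.
Variable C : (X -> R) -> Prop.
Hypothesis C_ne : exists P, C P.
Hypothesis C_dom : forall P, C P -> dominated P.

Let values_ne x : exists r, exists P, C P /\ r = P x.
Proof. destruct C_ne as [P HP]. eauto. Qed.

Let values_lb x : exists lb, forall r, (exists P, C P /\ r = P x) -> lb <= r.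
Proof. exists (- Q (bopp x)). intros r [P [HP ->]]. now apply dominated_lb, C_dom. Qed.

Lemma chain_inf_le P : C P -> fle (chain_inf C) P.
Proof. intros HP x. apply Rinf_lb; eauto. Qed.

Lemma chain_inf_ge P0 : (forall P, C P -> fle P0 P) -> fle P0 (chain_inf C).
Proof. intros H x. apply Rinf_glb; auto. intros r [P [HP ->]]. now apply H. Qed.

Lemma chain_inf_dominated : chain C -> dominated (chain_inf C).
Proof.
  intro Hc. split; [split|].
  - intros x y. apply Rinf_le_sum; auto.
    intros a b [P1 [H1 ->]] [P2 [H2 ->]].
    destruct (C_dom P1 H1) as [[S1 _] _], (C_dom P2 H2) as [[S2 _] _].
    destruct (Hc P1 P2 H1 H2) as [L|L].
    + eapply Rle_trans; [apply (chain_inf_le P1 H1)|].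
      eapply Rle_trans; [apply S1|]. specialize (L y). lra.
    + eapply Rle_trans; [apply (chain_inf_le P2 H2)|].
      eapply Rle_trans; [apply S2|]. specialize (L x). lra.
  - intros s x Hs. apply Rinf_le_scal; auto.
    intros a [P [HP ->]]. eapply Rle_trans; [apply (chain_inf_le P HP)|].
    destruct (C_dom P HP) as [[_ S2] _]. auto.
  - intro x. destruct C_ne as [P HP]. eapply Rle_trans; [apply (chain_inf_le P HP)|].
    apply (C_dom P HP).
Qed.

End ChainInf.

Definition strictly_below (P P' : X -> R) := dominated P' /\ fle P' P /\ ~ fle P P'.

Definition shrink (P : X -> R) : X -> R :=
  match excluded_middle_informative (exists P', strictly_below P P') with
  | left _ => epsilon (inhabits P) (strictly_below P)
  | right _ => P
  end.

Lemma shrink_le P : fle (shrink P) P.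
Proof.
  unfold shrink. destruct excluded_middle_informative as [H|H].
  - apply (epsilon_spec (inhabits P) (strictly_below P) H).
  - intro; lra.
Qed.

Lemma shrink_dominated P : dominated P -> dominated (shrink P).
Proof.
  unfold shrink. destruct excluded_middle_informative as [H|H]; auto.
  intros _. apply (epsilon_spec (inhabits P) (strictly_below P) H).
Qed.

Lemma shrink_fixed_minimal P :
  fle P (shrink P) -> forall P', dominated P' -> fle P' P -> fle P P'.
Proof.
  unfold shrink. destruct excluded_middle_informative as [H|H].
  - pose proof (epsilon_spec (inhabits P) (strictly_below P) H) as [_ [_ A]]. tauto.
  - intros _ P' H1 H2. apply NNPP. intro H3. apply H. exists P'. now split.
Qed.

(* Zorn's lemma by the tower method: the least family containing [Q] and closed
   under [shrink] and under infima of nonempty chains is itself a chain; its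
   infimum lies in it, so it is a fixed point of [shrink], i.e. minimal. *)
Inductive tower : (X -> R) -> Prop :=
| tower_top : tower Q
| tower_shrink : forall P, tower P -> tower (shrink P)
| tower_inf : forall C, (forall P, C P -> tower P) -> chain C -> (exists P, C P) ->
    tower (chain_inf C).

Lemma tower_dominated P : tower P -> dominated P.
Proof.
  induction 1.
  - split; auto. intro; lra.
  - now apply shrink_dominated.
  - now apply chain_inf_dominated.
Qed.

Definition extreme c := forall y, tower y -> fle c y -> ~ fle y c -> fle c (shrink y).

Lemma extreme_comparable c : tower c -> extreme c ->
  forall y, tower y -> fle c y \/ fle y (shrink c).
Proof.
  intros Tc Ec y Ty. induction Ty as [|y' Ty' IH|C HC IH Hch Hne].
  - left. apply (tower_dominated c Tc).
  - destruct IH as [L|L].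
    + destruct (classic (fle y' c)) as [L2|L2].
      * assert (y' = c) by (apply fle_antisym; auto). subst. right. intro; lra.
      * left. now apply Ec.
    + right. eapply fle_trans; [apply shrink_le | exact L].
  - destruct (classic (forall P, C P -> fle c P)) as [A|A].
    + left. now apply chain_inf_ge.
    + right. apply not_all_ex_not in A. destruct A as [P A].
      apply imply_to_and in A. destruct A as [CP A].
      destruct (IH P CP) as [B|B]; [tauto|].
      eapply fle_trans; [|exact B]. apply chain_inf_le; auto.
      intros; now apply tower_dominated, HC.
Qed.

Lemma tower_extreme c : tower c -> extreme c.
Proof.
  induction 1 as [|c' Tc' IH|C HC IH Hch Hne].
  - intros y Ty _ B. exfalso. apply B. apply (tower_dominated y Ty).
  - intros y Ty A B. destruct (extreme_comparable c' Tc' IH y Ty) as [L|L]; [|tauto].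
    destruct (classic (fle y c')) as [L2|L2].
    + assert (y = c') by (apply fle_antisym; auto). subst. intro; lra.
    + eapply fle_trans; [apply shrink_le|]. now apply IH.
  - intros y Ty A B.
    assert (Hex : exists P, C P /\ ~ fle y P).
    { apply NNPP. intro N. apply B. apply chain_inf_ge; auto. intros P CP.
      apply NNPP. intro N2. apply N. eauto. }
    destruct Hex as [P [CP NP]].
    destruct (extreme_comparable P (HC P CP) (IH P CP) y Ty) as [L|L].
    + eapply fle_trans.
      * apply chain_inf_le; eauto. intros; now apply tower_dominated, HC.
      * now apply IH.
    + exfalso. apply NP. eapply fle_trans; [exact L | apply shrink_le].
Qed.

Lemma tower_chain : chain tower.
Proof.
  intros c y Tc Ty. destruct (extreme_comparable c Tc (tower_extreme c Tc) y Ty); auto.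
  right. eapply fle_trans; eauto. apply shrink_le.
Qed.

Lemma minimal_dominated_exists : exists P, minimal_dominated P.
Proof.
  assert (Tm : tower (chain_inf tower)).
  { apply tower_inf; auto. apply tower_chain. exists Q; constructor. }
  exists (chain_inf tower). split; [now apply tower_dominated|].
  apply shrink_fixed_minimal. apply chain_inf_le.
  - exists Q; constructor.
  - apply tower_dominated.
  - now constructor.
Qed.

End Tower.

(* For a sublinear [P] and a direction [z], the functional
   [x |-> inf_{t >= 0} (P (x + t z) - t P z)] is again sublinear and below [P];
   minimality of [P] forces equality, whence superadditivity. *)
Section Minimal.
Variables Q P : X -> R.
Hypothesis HP : minimal_dominated Q P.
Variable z : X.

Let sP : sublinear P := proj1 (proj1 HP).

Definition shifted x := Rinf (fun r => exists t, 0 <= t /\ r = P (badd x (bscal t z)) - t * P z).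

Let shifted_ne x : exists r, exists t, 0 <= t /\ r = P (badd x (bscal t z)) - t * P z.
Proof. eexists. exists 0. split; [lra | reflexivity]. Qed.

Let shifted_lb x :
  exists lb, forall r, (exists t, 0 <= t /\ r = P (badd x (bscal t z)) - t * P z) -> lb <= r.
Proof.
  exists (- P (bopp x)). intros r [t [Ht ->]].
  rewrite <- (sublinear_scal_nonneg P t z sP Ht).
  replace (bscal t z) with (badd (badd x (bscal t z)) (bopp x)) at 2 by vec_eq.
  pose proof (proj1 sP (badd x (bscal t z)) (bopp x)). lra.
Qed.

Let shifted_le_at x t : 0 <= t -> shifted x <= P (badd x (bscal t z)) - t * P z.
Proof. intro Ht. apply Rinf_lb; eauto. Qed.

Let shifted_le : fle shifted P.
Proof. intro x. pose proof (shifted_le_at x 0). rewrite bscal_0, badd_0r in H. lra. Qed.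

Let shifted_sublinear : sublinear shifted.
Proof.
  split.
  - intros x1 x2. apply Rinf_le_sum; auto.
    intros a b [t1 [H1 ->]] [t2 [H2 ->]].
    eapply Rle_trans; [apply (shifted_le_at _ (t1 + t2)); lra|].
    replace (badd (badd x1 x2) (bscal (t1 + t2) z))
      with (badd (badd x1 (bscal t1 z)) (badd x2 (bscal t2 z))) by vec_eq.
    pose proof (proj1 sP (badd x1 (bscal t1 z)) (badd x2 (bscal t2 z))). lra.
  - intros s y Hs. apply Rinf_le_scal; auto.
    intros a [t [Ht ->]].
    eapply Rle_trans; [apply (shifted_le_at _ (s * t)); nra|].
    replace (badd (bscal s y) (bscal (s * t) z)) with (bscal s (badd y (bscal t z))) by vec_eq.
    rewrite sublinear_scal; auto. lra.
Qed.

Lemma minimal_dominated_superadditive x : P x + P z <= P (badd x z).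
Proof.
  assert (Hdom : dominated Q shifted).
  { split; [apply shifted_sublinear|].
    exact (fle_trans _ _ _ shifted_le (proj2 (proj1 HP))). }
  pose proof (proj2 HP shifted Hdom shifted_le x).
  pose proof (shifted_le_at x 1 ltac:(lra)). rewrite bscal_1 in H0. lra.
Qed.

End Minimal.

Lemma minimal_dominated_linear Q P : minimal_dominated Q P -> linear X P.
Proof.
  intro HM. pose proof (proj1 (proj1 HM)) as HP.
  pose proof (sublinear_zero P HP) as P0.
  assert (Hadd : forall x y, P (badd x y) = P x + P y).
  { intros. apply Rle_antisym; [apply HP | now apply minimal_dominated_superadditive with Q]. }
  assert (Hopp : forall x, P (bopp x) = - P x).
  { intro x. pose proof (Hadd x (bopp x)). rewrite badd_oppr, P0 in H. lra. }
  split; auto.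
  intros a x. destruct (Rtotal_order a 0) as [Hn|[->|Hp]].
  - replace (bscal a x) with (bopp (bscal (- a) x)) by vec_eq.
    rewrite Hopp, sublinear_scal; auto; lra.
  - rewrite bscal_0, P0. ring.
  - now apply sublinear_scal.
Qed.

Theorem hahn_banach Q : sublinear Q -> exists phi, linear X phi /\ fle phi Q.
Proof.
  intro HQ. destruct (minimal_dominated_exists Q HQ) as [P HM].
  exists P. split; [now apply minimal_dominated_linear with Q | apply (proj1 HM)].
Qed.

End HahnBanach.

(** * Subgradients and Ekeland's principle *)

(* A convex function minorized by a cone [f v - L |w - v|] at [v] has a
   subgradient at [v] of norm at most [L]: apply Hahn-Banach to the sublinear
   hull [y |-> inf_{t > 0, s} (f (v + s) - f v + L |t y - s|) / t] of the
   difference quotients. *)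
Section Subgradient.
Variable X : Banach.
Notation bsub := (bsub X).
Variable f : X -> Rbar.
Variables (v : X) (fv L : R).
Hypothesis f_convex : convex_fun X f.
Hypothesis f_nMInf : forall w, f w <> MInf.
Hypothesis f_v : f v = Fin fv.
Hypothesis L_ge0 : 0 <= L.
Hypothesis f_cone : forall w, Rbar_le (Fin (fv - L * bnorm (bsub w v))) (f w).

Definition quotient y t w b := (b - fv + L * bnorm (bsub (bscal t y) (bsub w v))) / t.

Definition quotients y r := exists t w b, 0 < t /\ f w = Fin b /\ r = quotient y t w b.

Definition support y := Rinf (quotients y).

Let quotients_ne y : exists r, quotients y r.
Proof. eexists. exists 1, v, fv. split; [lra|]. split; eauto. Qed.

Let quotients_lb y : exists lb, forall r, quotients y r -> lb <= r.
Proof.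
  exists (- L * bnorm y). intros r [t [w [b [Ht [Hw ->]]]]].
  pose proof (f_cone w) as H1. rewrite Hw in H1. simpl in H1.
  assert (bnorm (bsub w v) <= bnorm (bsub (bscal t y) (bsub w v)) + t * bnorm y).
  { rewrite (bnorm_sub_sym X (bscal t y)), <- (bnorm_scal_nonneg X t y) by lra.
    replace (bsub w v) with (badd (bsub (bsub w v) (bscal t y)) (bscal t y)) at 1 by vec_eq.
    apply bnorm_triangle. }
  unfold quotient. apply Rmult_le_reg_r with t; auto.
  replace ((b - fv + L * bnorm (bsub (bscal t y) (bsub w v))) / t * t)
    with (b - fv + L * bnorm (bsub (bscal t y) (bsub w v))) by (field; lra).
  assert (L * bnorm (bsub w v) <= L * (bnorm (bsub (bscal t y) (bsub w v)) + t * bnorm y))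
    by (apply Rmult_le_compat_l; auto).
  nra.
Qed.

Lemma support_le y t w b : 0 < t -> f w = Fin b -> support y <= quotient y t w b.
Proof. intros Ht Hw. apply Rinf_lb; auto. exists t, w, b. auto. Qed.

(* Two quotients are merged through the convex combination of their base points
   with weights [t2, t1] / (t1 + t2). *)
Lemma quotient_merge x y t1 w1 b1 t2 w2 b2 : 0 < t1 -> 0 < t2 ->
  f w1 = Fin b1 -> f w2 = Fin b2 ->
  support (badd x y) <= quotient x t1 w1 b1 + quotient y t2 w2 b2.
Proof.
  intros Ht1 Ht2 Hw1 Hw2.
  set (lam := t2 / (t1 + t2)).
  assert (Hl0 : 0 < lam) by (apply Rdiv_lt_0_compat; lra).
  assert (Hl1 : lam < 1).
  { apply Rmult_lt_reg_r with (t1 + t2); [lra|].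
    unfold lam. replace (t2 / (t1 + t2) * (t1 + t2)) with t2 by (field; lra). lra. }
  assert (Heq : (1 - lam) * t2 = lam * t1) by (unfold lam; field; lra).
  set (w := badd (bscal lam w1) (bscal (1 - lam) w2)).
  pose proof (f_convex w1 w2 lam b1 b2 ltac:(lra) Hw1 Hw2) as Hcv. fold w in Hcv.
  destruct (f w) as [bw| |] eqn:Ew; simpl in Hcv; try tauto;
    [|exfalso; eapply f_nMInf; eauto].
  set (V1 := bsub (bscal t1 x) (bsub w1 v)). set (V2 := bsub (bscal t2 y) (bsub w2 v)).
  assert (Hn : bnorm (bsub (bscal (lam * t1) (badd x y)) (bsub w v)) <=
               lam * bnorm V1 + (1 - lam) * bnorm V2).
  { replace (bsub (bscal (lam * t1) (badd x y)) (bsub w v))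
      with (badd (bscal lam V1) (bscal (1 - lam) V2))
      by (rewrite bscal_distr_l; rewrite <- Heq at 2; unfold V1, V2, w; vec_eq).
    eapply Rle_trans; [apply bnorm_triangle|].
    rewrite !bnorm_scal_nonneg by lra. lra. }
  eapply Rle_trans; [apply (support_le (badd x y) (lam * t1) w bw); auto; nra|].
  unfold quotient. fold V1 V2.
  apply Rle_trans with ((lam * (b1 - fv + L * bnorm V1) + (1 - lam) * (b2 - fv + L * bnorm V2))
                        / (lam * t1)).
  - unfold Rdiv. apply Rmult_le_compat_r; [left; apply Rinv_0_lt_compat; nra|].
    assert (L * bnorm (bsub (bscal (lam * t1) (badd x y)) (bsub w v)) <=
            L * (lam * bnorm V1 + (1 - lam) * bnorm V2)) by (apply Rmult_le_compat_l; auto).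
    nra.
  - right. unfold lam. field. lra.
Qed.

Lemma support_sublinear : sublinear X support.
Proof.
  split.
  - intros x y. apply Rinf_le_sum; auto.
    intros a c [t1 [w1 [b1 [Ht1 [Hw1 ->]]]]] [t2 [w2 [b2 [Ht2 [Hw2 ->]]]]].
    now apply quotient_merge.
  - intros s y Hs. apply Rinf_le_scal; auto.
    intros a [t [w [b [Ht [Hw ->]]]]].
    eapply Rle_trans; [apply (support_le (bscal s y) (t / s) w b); auto;
                       apply Rdiv_lt_0_compat; auto|].
    unfold quotient. rewrite bscal_assoc. replace (t / s * s) with t by (field; lra).
    right. field. lra.
Qed.

Theorem subgradient_of_cone_minorant : exists phi, is_dual X phi /\
  (forall y, Rabs (phi y) <= L * bnorm y) /\
  forall w, Rbar_le (Fin (fv + phi (bsub w v))) (f w).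
Proof.
  destruct (hahn_banach X support support_sublinear) as [phi [Hl Hle]].
  assert (B : forall y, Rabs (phi y) <= L * bnorm y).
  { apply linear_abs_le; auto. intro y.
    eapply Rle_trans; [apply Hle|].
    eapply Rle_trans; [apply (support_le y 1 v fv); auto; lra|].
    unfold quotient. replace (bsub (bscal 1 y) (bsub v v)) with y by vec_eq.
    right; field. }
  exists phi. split; [|split]; auto.
  - eapply dual_of_bound; eauto.
  - intro w. destruct (f w) as [b| |] eqn:Ew; simpl; auto; [|exfalso; eapply f_nMInf; eauto].
    pose proof (Hle (bsub w v)). pose proof (support_le (bsub w v) 1 w b ltac:(lra) Ew).
    unfold quotient in H0.
    replace (bsub (bscal 1 (bsub w v)) (bsub w v)) with (@bzero X) in H0 by vec_eq.
    rewrite bnorm_zero in H0. replace ((b - fv + L * 0) / 1) with (b - fv) in H0 by field.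
    lra.
Qed.

End Subgradient.

Lemma norming_functional (X : Banach) (v : X) : exists phi, is_dual X phi /\
  (forall y, Rabs (phi y) <= bnorm y) /\ phi v = bnorm v.
Proof.
  destruct (subgradient_of_cone_minorant X (fun w => Fin (bnorm w)) v (bnorm v) 1)
    as [phi [Hd [Hb Hsub]]]; try lra; auto.
  - intros x y t a b Ht Hx Hy. inversion Hx; inversion Hy; subst. simpl.
    eapply Rle_trans; [apply bnorm_triangle|]. rewrite !bnorm_scal_nonneg by lra. lra.
  - discriminate.
  - intro w. simpl. rewrite Rmult_1_l, bnorm_sub_sym.
    pose proof (bnorm_sub_triangle X v w bzero).
    replace (bsub X v bzero) with v in H by vec_eq.
    replace (bsub X w bzero) with w in H by vec_eq. lra.
  - exists phi. split; [exact Hd|]. split; [intro y; rewrite <- (Rmult_1_l (bnorm y)); auto|].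
    pose proof (Hsub bzero) as H0. simpl in H0.
    rewrite (linear_sub X phi (dual_linear X phi Hd)), (linear_zero X phi (dual_linear X phi Hd)),
      bnorm_zero in H0.
    pose proof (Rle_abs (phi v)). specialize (Hb v). lra.
Qed.

Lemma inv_succ_lt e : 0 < e -> exists n, / INR (S n) < e.
Proof.
  intro He. destruct (archimed_cor1 e He) as [[|N] [H1 H2]]; [lia|]. now exists N.
Qed.

Lemma inv_succ_pos n : 0 < / INR (S n).
Proof. apply Rinv_0_lt_compat, lt_0_INR. lia. Qed.

Lemma le_0_of_le_inv_succ x C : (forall n, x <= C * / INR (S n)) -> x <= 0.
Proof.
  intro H. apply Rnot_lt_le. intro Hx.
  assert (HC : 0 < C) by (specialize (H O); simpl in H; nra).
  destruct (inv_succ_lt (x / C)) as [n Hn]; [now apply Rdiv_lt_0_compat|].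
  specialize (H n). apply (Rmult_lt_compat_l C) in Hn; auto.
  replace (C * (x / C)) with x in Hn by (field; lra). lra.
Qed.

(* Ekeland's variational principle: the point [v] is the limit of a sequence of
   nested "drop" sets [{w | h w + kap |w - y| <= h y}], each point chosen
   almost minimizing [h] on the previous drop set. *)
Section Ekeland.
Variable X : Banach.
Notation bsub := (bsub X).
Variable h : X -> Rbar.
Variables (u0 : X) (a0 kap : R).
Hypothesis h_ge0 : forall w, Rbar_le (Fin 0) (h w).
Hypothesis h_lsc : lsc X h.
Hypothesis h_u0 : h u0 = Fin a0.
Hypothesis kap_pos : 0 < kap.

Let hval w := match h w with Fin b => b | _ => 0 end.

Definition drop y w := h w = Fin (hval w) /\ hval w + kap * bnorm (bsub w y) <= hval y.

Let drop_refl y : h y = Fin (hval y) -> drop y y.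
Proof. intro E. split; auto. rewrite bnorm_sub_diag. lra. Qed.

Let drop_trans y y' w : drop y y' -> drop y' w -> drop y w.
Proof.
  intros [E1 H1] [E2 H2]. split; auto. pose proof (bnorm_sub_triangle X w y' y). nra.
Qed.

Let drop_values y r := exists w, drop y w /\ r = hval w.

Let inf_drop y := Rinf (drop_values y).

Let drop_values_lb y : exists lb, forall r, drop_values y r -> lb <= r.
Proof.
  exists 0. intros r [w [[E _] ->]]. pose proof (h_ge0 w) as Hw. now rewrite E in Hw.
Qed.

Let inf_drop_le y w : drop y w -> inf_drop y <= hval w.
Proof.
  intro H. apply Rinf_lb; [exists (hval w) | apply drop_values_lb |]; unfold drop_values; eauto.
Qed.

Let next y n := epsilon (inhabits y) (fun w => drop y w /\ hval w <= inf_drop y + / INR (S n)).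

Let next_spec y n : h y = Fin (hval y) ->
  drop y (next y n) /\ hval (next y n) <= inf_drop y + / INR (S n).
Proof.
  intro E. apply epsilon_spec.
  assert (Hne : exists r, drop_values y r) by (exists (hval y), y; auto).
  destruct (Rinf_approx (drop_values y) Hne (/ INR (S n)) (inv_succ_pos n))
    as [r [[w [Hw ->]] Hr]].
  exists w. split; auto. unfold inf_drop. lra.
Qed.

Let seq := fix seq (n : nat) : X := match n with O => u0 | S k => next (seq k) k end.

Let seq_fin n : h (seq n) = Fin (hval (seq n)).
Proof.
  induction n; simpl.
  - unfold hval. now rewrite h_u0.
  - apply (next_spec (seq n) n IHn).
Qed.

Let seq_drop n p : (n <= p)%nat -> drop (seq n) (seq p).
Proof.
  induction 1; [now apply drop_refl, seq_fin|].
  eapply drop_trans; [eassumption|]. apply (next_spec (seq m) m (seq_fin m)).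
Qed.

Let seq_drop_small n w : drop (seq (S n)) w -> kap * bnorm (bsub w (seq (S n))) <= / INR (S n).
Proof.
  intros H.
  pose proof (inf_drop_le _ _ (drop_trans _ _ _ (seq_drop n (S n) (le_S _ _ (le_n n))) H)).
  pose proof (proj2 (next_spec (seq n) n (seq_fin n))).
  change (next (seq n) n) with (seq (S n)) in H1. destruct H as [_ H]. lra.
Qed.

Let seq_cauchy e : 0 < e -> exists N, forall p q, (N <= p)%nat -> (N <= q)%nat ->
  bnorm (badd (seq p) (bopp (seq q))) < e.
Proof.
  intros He. destruct (inv_succ_lt (e * kap / 2)) as [n Hn]; [apply Rdiv_lt_0_compat; nra|].
  exists (S n). intros p q Hp Hq.
  pose proof (seq_drop_small n (seq p) (seq_drop _ _ Hp)).
  pose proof (seq_drop_small n (seq q) (seq_drop _ _ Hq)).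
  change (badd (seq p) (bopp (seq q))) with (bsub (seq p) (seq q)).
  pose proof (bnorm_sub_triangle X (seq p) (seq (S n)) (seq q)).
  rewrite (bnorm_sub_sym X (seq (S n)) (seq q)) in H1.
  assert (kap * bnorm (bsub (seq p) (seq q)) < e * kap) by nra.
  nra.
Qed.

Let not_drop_lt y v : ~ drop y v -> Rbar_lt (Fin (hval y - kap * bnorm (bsub v y))) (h v).
Proof.
  intro NS. unfold drop in NS. destruct (h v) as [b| |] eqn:E.
  - assert (Hv : hval v = b) by (unfold hval; now rewrite E).
    rewrite Hv in NS. split.
    + simpl. apply Rnot_lt_le. intro Hb. apply NS. split; [reflexivity | lra].
    + intro Q. inversion Q. apply NS. split; [reflexivity | lra].
  - split; [simpl; auto | discriminate].
  - pose proof (h_ge0 v) as H. rewrite E in H. contradiction.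
Qed.

Let drop_closed y (s : nat -> X) v : (forall p, drop y (s p)) ->
  (forall e, 0 < e -> exists N, forall n, (N <= n)%nat -> bnorm (badd (s n) (bopp v)) < e) ->
  drop y v.
Proof.
  intros Hs Hv. apply NNPP. intro NS.
  destruct (Rbar_lt_fin_gap _ _ (not_drop_lt y v NS)) as [m0 [Hm0 Hlt]].
  destruct (h_lsc v _ Hlt) as [d [Hd Hball]].
  destruct (Hv (Rmin d (m0 / kap))) as [N HN];
    [apply Rmin_pos; auto; apply Rdiv_lt_0_compat; auto|].
  specialize (HN N (le_n N)). change (badd (s N) (bopp v)) with (bsub (s N) v) in HN.
  pose proof (Rmin_l d (m0 / kap)). pose proof (Rmin_r d (m0 / kap)).
  assert (Hk : kap * bnorm (bsub (s N) v) < m0).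
  { apply Rmult_lt_reg_r with (/ kap); [now apply Rinv_0_lt_compat|].
    replace (kap * bnorm (bsub (s N) v) * / kap) with (bnorm (bsub (s N) v)) by (field; lra).
    fold (m0 / kap). lra. }
  destruct (Hs N) as [Ek Hkk].
  specialize (Hball (s N) ltac:(lra)). rewrite Ek in Hball.
  destruct Hball as [Hb _]. simpl in Hb.
  pose proof (bnorm_sub_triangle X v (s N) y).
  rewrite (bnorm_sub_sym X v (s N)) in H1. nra.
Qed.

Theorem ekeland : exists v a, h v = Fin a /\ a + kap * bnorm (bsub v u0) <= a0 /\
  forall w, Rbar_le (Fin (a - kap * bnorm (bsub w v))) (h w).
Proof.
  destruct (bcomplete X seq seq_cauchy) as [v Hv].
  assert (Hdrop : forall n, drop (seq n) v).
  { intro n. apply (drop_closed (seq n) (fun p => seq (p + n)%nat)).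
    - intro p. apply seq_drop. lia.
    - intros e He. destruct (Hv e He) as [N HN]. exists N. intros m Hm. apply HN. lia. }
  destruct (Hdrop O) as [Ev Hv0]. simpl in Hv0.
  assert (hval u0 = a0) by (unfold hval; now rewrite h_u0).
  exists v, (hval v). split; auto. split; [lra|].
  intro w. apply NNPP. intro NL.
  destruct (h w) as [b| |] eqn:Ew; [| apply NL; simpl; auto |];
    [| pose proof (h_ge0 w) as H'; rewrite Ew in H'; contradiction].
  simpl in NL.
  assert (Hb : hval w = b) by (unfold hval; now rewrite Ew).
  assert (Hw : drop v w) by (split; rewrite Hb; [exact Ew | lra]).
  assert (Hz : bnorm (bsub w v) <= 0).
  { apply le_0_of_le_inv_succ with (C := 2 / kap). intro n.
    pose proof (seq_drop_small n w (drop_trans _ _ _ (Hdrop (S n)) Hw)).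
    pose proof (seq_drop_small n v (Hdrop (S n))).
    pose proof (bnorm_sub_triangle X w (seq (S n)) v).
    rewrite (bnorm_sub_sym X (seq (S n)) v) in H2.
    apply Rmult_le_reg_l with kap; auto.
    replace (kap * (2 / kap * / INR (S n))) with (2 * / INR (S n))
      by (field; split; [apply not_0_INR; lia | lra]).
    nra. }
  pose proof (bnorm_nonneg X (bsub w v)).
  assert (w = v) by (apply bnorm_sub_eq0; lra). subst w.
  rewrite bnorm_sub_diag in NL. lra.
Qed.

End Ekeland.

(** * Error bounds of perturbations *)

Section ErrorBounds.
Variable X : Banach.
Notation bsub := (bsub X).

Lemma Er_ge0 g : Rbar_le (Fin 0) (Er X g).
Proof.
  apply Rbar_inf_glb. intros a [x [[Hx1 Hx2] ->]].
  destruct (g x) as [r| |]; simpl in *; auto.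
  pose proof (dist_ge0 X x (Sf X g)).
  destruct (Defs.dist X x (Sf X g)) as [y| |]; simpl in *; try lra.
  assert (r <> 0) by (intro E; subst; auto).
  apply Rmult_le_pos; [lra|]. destruct (Req_dec y 0) as [->|Hy].
  - rewrite Rinv_0. lra.
  - left. apply Rinv_0_lt_compat. lra.
Qed.

Lemma Er_le_ratio g w a D : g w = Fin a -> 0 < a -> 0 < D ->
  Rbar_le (Fin D) (Defs.dist X w (Sf X g)) -> Rbar_le (Er X g) (Fin (a / D)).
Proof.
  intros Hw Ha HD Hdist.
  eapply Rbar_le_trans.
  - apply Rbar_inf_lb. exists w. split; [|reflexivity].
    rewrite Hw. split; [simpl; lra | intro E; inversion E; lra].
  - rewrite Hw. destruct (Defs.dist X w (Sf X g)) as [d| |]; simpl in *; try tauto.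
    + apply Rmult_le_compat_l; [lra|]. now apply Rinv_le_contravar.
    + apply Rlt_le, Rdiv_lt_0_compat; lra.
Qed.

Lemma ErFam_ge0 F : Rbar_le (Fin 0) (ErFam X F).
Proof. apply Rbar_inf_glb. intros a [g [_ ->]]. apply Er_ge0. Qed.

Lemma ErFam_le F g : F g -> Rbar_le (ErFam X F) (Er X g).
Proof. intro H. apply Rbar_inf_lb. eauto. Qed.

Lemma ErFam_mono (F G : (X -> Rbar) -> Prop) : (forall g, G g -> F g) ->
  Rbar_le (ErFam X F) (ErFam X G).
Proof. intro H. apply Rbar_inf_glb. intros a [g [Hg ->]]. apply ErFam_le. auto. Qed.

Lemma thr_mono (F G : R -> (X -> Rbar) -> Prop) :
  (forall e g, 0 < e -> G e g -> F e g) -> Rbar_le (thr X F) (thr X G).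
Proof.
  intro H. apply Rbar_inf_glb. intros a [e [He [HE ->]]]. apply Rbar_inf_lb.
  exists e. split; auto. split; auto. apply Rbar_le_antisym.
  - rewrite <- HE. apply ErFam_mono. intros; now apply H.
  - apply ErFam_ge0.
Qed.

Lemma dual_shift_convex xs x : is_dual X xs -> convex_real X (fun u => xs (bsub u x)).
Proof.
  intros Hd a b t Ht. pose proof (dual_linear X xs Hd) as L.
  rewrite !linear_sub, !linear_add, !linear_scal by auto. right. ring.
Qed.

Lemma dual_sub_diag xs x : is_dual X xs -> xs (bsub x x) = 0.
Proof.
  intro Hd. replace (bsub x x) with (@bzero X) by vec_eq.
  apply linear_zero, dual_linear, Hd.
Qed.

Lemma dual_shift_lipschitz xs x M : is_dual X xs -> Rbar_le (dnorm X xs) (Fin M) ->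
  forall u, Rabs (xs (bsub u x) - xs (bsub x x)) <= M * bnorm (bsub u x).
Proof.
  intros Hd Hn u. destruct (dnorm_fin X xs Hd) as [m [Em [Hm B]]].
  rewrite Em in Hn. simpl in Hn. rewrite dual_sub_diag, Rminus_0_r by exact Hd.
  eapply Rle_trans; [apply B|]. apply Rmult_le_compat_r; auto. apply bnorm_nonneg.
Qed.

Lemma Ptbwl_Ptbw f e g : Ptbwl X f e g -> Ptbw X f e g.
Proof.
  intros [x [xs [Hx [Hd [Hn Hg]]]]]. split.
  - exists x. unfold Sf. rewrite Hg, Hx, dual_sub_diag by exact Hd. simpl. lra.
  - exists (fun u => xs (bsub u x)). split; [now apply dual_shift_convex|]. split; auto.
    exists x. split; auto. now apply dual_shift_lipschitz.
Qed.

Lemma Ptbl_Ptb f e g : Ptbl X f e g -> Ptb X f e g.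
Proof.
  intros [x [xi [xs [Hx [Hxi [Hd [Hn [Hdiff Hg]]]]]]]]. split.
  - exists x. unfold Sf. rewrite Hg, Hx, dual_sub_diag by exact Hd. simpl. lra.
  - exists (fun u => xs (bsub u x)). split; [now apply dual_shift_convex|]. split; auto.
    exists x, xi. split; auto. split; auto. split.
    + now rewrite dual_sub_diag, Rabs_R0.
    + now apply dual_shift_lipschitz.
Qed.

End ErrorBounds.

Section BoundaryTilt.
Variable X : Banach.
Notation bsub := (bsub X).
Variable f : X -> Rbar.
Hypothesis f_nMInf : forall w, f w <> MInf.
Variable x : X.
Hypothesis f_x : f x = Fin 0.

Lemma d_bd_outside_near (S : (X -> R) -> Prop) xst r : d_bd X S xst -> 0 < r ->
  exists yst, is_dual X yst /\ Rbar_lt (dnorm X (dsub X yst xst)) (Fin r) /\ ~ S yst.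
Proof.
  intros [[Hd _] Hni] Hr. apply NNPP. intro N. apply Hni. split; auto. exists r. split; auto.
  intros ps Hps1 Hps2. apply NNPP. intro N2. apply N. eauto.
Qed.

Lemma not_subdiff_witness yst : is_dual X yst -> ~ subdiff X f x yst ->
  exists w b, f w = Fin b /\ b < yst (bsub w x).
Proof.
  intros Hd Hn. apply NNPP. intro N. apply Hn. split; auto. exists 0. split; auto.
  intro u. destruct (f u) as [b| |] eqn:Eu; simpl; auto.
  - apply Rnot_lt_le. intro Hl. apply N. exists u, b. split; auto. lra.
  - exfalso; eapply f_nMInf; eauto.
Qed.

(* Tilting [f] by [yst - 2 psi] makes [w] a point of value comparable to
   [k = (yst - psi)(w - x)], while on [S_g] the functional [yst - psi] is
   nonpositive, so [w] stays at distance [k / del] from [S_g]. *)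
Lemma Er_tilt_le psi yst del w b : subdiff X f x psi -> is_dual X yst -> 0 < del ->
  (forall v, Rabs (yst v - psi v) <= del * bnorm v) -> f w = Fin b -> b < yst (bsub w x) ->
  Rbar_le (Er X (fun u => Rbar_plus_R (f u) (yst (bsub u x) - 2 * psi (bsub u x))))
          (Fin (2 * del)).
Proof.
  intros [Hpd [a0 [Ha0 Hsub]]] Hyd Hdel Hclose Hfw Hb.
  rewrite f_x in Ha0. inversion Ha0. subst a0.
  pose proof (dual_linear X psi Hpd) as Lp. pose proof (dual_linear X yst Hyd) as Ly.
  set (g := fun u => Rbar_plus_R (f u) (yst (bsub u x) - 2 * psi (bsub u x))).
  assert (Hpw : psi (bsub w x) <= b)
    by (specialize (Hsub w); rewrite Hfw in Hsub; simpl in Hsub; lra).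
  set (k := yst (bsub w x) - psi (bsub w x)).
  assert (Hdist : Rbar_le (Fin (k / del)) (Defs.dist X w (Sf X g))).
  { apply dist_glb. intros u Hu. unfold Sf, g in Hu.
    destruct (f u) as [c| |] eqn:Eu; simpl in Hu; try tauto; [|exfalso; eapply f_nMInf; eauto].
    pose proof (Hsub u) as Hpu. rewrite Eu in Hpu. simpl in Hpu.
    assert (Hk : k <= yst (bsub w u) - psi (bsub w u)).
    { unfold k. rewrite !linear_sub in * by auto. lra. }
    pose proof (Rle_abs (yst (bsub w u) - psi (bsub w u))).
    specialize (Hclose (bsub w u)). rewrite bnorm_sub_sym in Hclose.
    apply Rmult_le_reg_l with del; auto.
    replace (del * (k / del)) with k by (field; lra). lra. }
  eapply Rbar_le_trans.
  - apply (Er_le_ratio X g w (b + (yst (bsub w x) - 2 * psi (bsub w x))) (k / del)); auto.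
    + unfold g. now rewrite Hfw.
    + unfold k in *. lra.
    + apply Rdiv_lt_0_compat; unfold k; lra.
  - simpl. apply Rmult_le_reg_r with (k / del); [apply Rdiv_lt_0_compat; unfold k; lra|].
    replace ((b + (yst (bsub w x) - 2 * psi (bsub w x))) / (k / del) * (k / del))
      with (b + (yst (bsub w x) - 2 * psi (bsub w x))) by (field; unfold k; lra).
    replace (2 * del * (k / del)) with (2 * k) by (field; lra). unfold k. lra.
Qed.

Lemma ErFam_Ptbwl_bd_zero xst m e : d_bd X (subdiff X f x) xst ->
  dnorm X xst = Fin m -> m < e -> ErFam X (Ptbwl X f e) = Fin 0.
Proof.
  intros Hbd Em Hme. pose proof (proj1 (proj1 Hbd)) as Hd.
  destruct (dnorm_fin X xst Hd) as [m' [Em' [Hm0 Bm]]]. rewrite Em in Em'. inversion Em'.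
  subst m'.
  apply Rbar_le_antisym; [|apply ErFam_ge0].
  apply Rbar_le_fin_eps. intros eta Heta.
  set (r := Rmin ((e - m) / 3) (eta / 4)).
  assert (Hr : 0 < r) by (apply Rmin_pos; lra).
  assert (Hr1 : r <= (e - m) / 3) by apply Rmin_l.
  assert (Hr2 : r <= eta / 4) by apply Rmin_r.
  destruct (proj2 (proj1 Hbd) r Hr) as [psi [Hpd [Hps Hpl]]].
  destruct (d_bd_outside_near _ _ _ Hbd Hr) as [yst [Hyd [Hyl Hyn]]].
  destruct (dnorm_lt_fin X _ _ (dual_dsub X psi xst Hpd Hd) Hpl) as [d1 [Hd1 [Hd10 B1]]].
  destruct (dnorm_lt_fin X _ _ (dual_dsub X yst xst Hyd Hd) Hyl) as [d2 [Hd2 [Hd20 B2]]].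
  destruct (not_subdiff_witness yst Hyd Hyn) as [w [b [Hfw Hb]]].
  assert (Hg : Ptbwl X f e (fun u => Rbar_plus_R (f u) (yst (bsub u x) - 2 * psi (bsub u x)))).
  { exists x, (fun v => yst v - 2 * psi v). split; auto. split; [now apply dual_sub_scal|].
    split; auto. eapply Rbar_le_trans; [apply (dnorm_sub_scal_le X xst yst psi 2 m d2 d1); auto|].
    simpl. rewrite (Rabs_left (1 - 2)), (Rabs_pos_eq 2) by lra. lra. }
  eapply Rbar_le_trans; [exact (ErFam_le X _ _ Hg)|].
  eapply Rbar_le_trans; [apply (Er_tilt_le psi yst (2 * r) w b); auto; try lra|].
  - intro v. specialize (B1 v). specialize (B2 v). unfold dsub in B1, B2.
    pose proof (bnorm_nonneg X v).
    pose proof (Rabs_sub_triang (yst v - xst v) (psi v - xst v)) as T.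
    replace (yst v - psi v) with (yst v - xst v - (psi v - xst v)) by ring.
    assert ((d2 + d1) * bnorm v <= 2 * r * bnorm v) by (apply Rmult_le_compat_r; lra).
    lra.
  - simpl. lra.
Qed.

End BoundaryTilt.

Lemma thr_Ptbwl_le_bd_mod (X : Banach) f : (forall w, f w <> MInf) ->
  Rbar_le (thr X (Ptbwl X f)) (bd_mod X f).
Proof.
  intro Hm. apply Rbar_inf_glb. intros a [x [Hx ->]]. apply Rbar_inf_glb.
  intros a' [xst [Hd [Hbd ->]]].
  destruct (dnorm_fin X xst Hd) as [m [Em [Hm0 _]]]. rewrite Em.
  apply Rbar_le_fin_eps. intros e He. apply Rbar_inf_lb. exists e.
  split; [lra|].
  split; [|reflexivity]. now apply (ErFam_Ptbwl_bd_zero X f Hm x Hx xst m).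
Qed.

(* A convex function that is [xi]-Lipschitz at the single point [x] is
   [xi]-Lipschitz: a violation at [v, w] would be amplified along the ray from
   [v] through [w] beyond the cone at [x]. *)
Lemma convex_lipschitz_of_lipschitz_at (X : Banach) (p : X -> R) x xi :
  0 <= xi -> convex_real X p ->
  (forall u, Rabs (p u - p x) <= xi * bnorm (bsub X u x)) ->
  forall v w, p w - p v <= xi * bnorm (bsub X w v).
Proof.
  intros Hxi Hc Hl v w. apply Rnot_lt_le. intro Hlt.
  set (del := p w - p v - xi * bnorm (bsub X w v)).
  assert (Hdel : 0 < del) by (unfold del; lra).
  pose proof (bnorm_nonneg X (bsub X v x)) as Nvx.
  set (s := 1 + 2 * xi * bnorm (bsub X v x) / del).
  assert (Hs : 1 <= s).
  { assert (0 <= 2 * xi * bnorm (bsub X v x) / del); [|unfold s; lra].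
    apply Rmult_le_pos; [nra | left; now apply Rinv_0_lt_compat]. }
  assert (Hsdel : s * del = del + 2 * xi * bnorm (bsub X v x)) by (unfold s; field; lra).
  set (z := badd v (bscal s (bsub X w v))).
  assert (Hw : badd (bscal (/ s) z) (bscal (1 - / s) v) = w).
  { transitivity (badd v (bscal (/ s) (bscal s (bsub X w v)))); [unfold z; vec_eq|].
    rewrite bscal_assoc, Rinv_l, bscal_1 by lra. vec_eq. }
  assert (Hs0 : 0 < / s) by (apply Rinv_0_lt_compat; lra).
  assert (Hs1 : / s <= 1) by (rewrite <- Rinv_1; apply Rinv_le_contravar; lra).
  pose proof (Hc z v (/ s) ltac:(lra)) as Hcv. rewrite Hw in Hcv.
  assert (Hcv2 : s * p w <= p z + (s - 1) * p v).
  { apply Rmult_le_compat_l with (r := s) in Hcv; [|lra].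
    replace (s * (/ s * p z + (1 - / s) * p v)) with (p z + (s - 1) * p v) in Hcv
      by (field; lra).
    exact Hcv. }
  assert (Hz : p z <= p x + xi * (s * bnorm (bsub X w v) + bnorm (bsub X v x))).
  { pose proof (Hl z) as H. pose proof (Rle_abs (p z - p x)).
    pose proof (bnorm_sub_triangle X z v x) as T.
    replace (bsub X z v) with (bscal s (bsub X w v)) in T by (unfold z; vec_eq).
    rewrite bnorm_scal_nonneg in T by lra.
    assert (xi * bnorm (bsub X z x) <= xi * (s * bnorm (bsub X w v) + bnorm (bsub X v x)))
      by (apply Rmult_le_compat_l; auto).
    lra. }
  assert (Hv : p x - xi * bnorm (bsub X v x) <= p v).
  { pose proof (Hl v). pose proof (Rle_abs (- (p v - p x))). rewrite Rabs_Ropp in H0. lra. }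
  assert (s * del <= 2 * xi * bnorm (bsub X v x)) by (unfold del; nra).
  lra.
Qed.

Section Perturbation.
Variable X : Banach.
Variables (f g : X -> Rbar) (p : X -> R) (xi : R).
Hypothesis f_nMInf : forall w, f w <> MInf.
Hypothesis p_lipschitz : forall v w, p w - p v <= xi * bnorm (bsub X w v).
Hypothesis g_def : forall u, g u = Rbar_plus_R (f u) (p u).

Lemma perturbation_nMInf w : g w <> MInf.
Proof.
  rewrite g_def. destruct (f w) eqn:E; simpl; try discriminate. exfalso; eapply f_nMInf; eauto.
Qed.

Lemma perturbation_convex : convex_fun X f -> convex_real X p -> convex_fun X g.
Proof.
  intros Hfc Hpc x y t a b Ht Hx Hy. rewrite g_def in *.
  apply Rbar_plus_R_fin in Hx. apply Rbar_plus_R_fin in Hy.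
  pose proof (Hfc x y t _ _ Ht Hx Hy). pose proof (Hpc x y t Ht).
  destruct (f (badd (bscal t x) (bscal (1 - t) y))); simpl in *; auto. nra.
Qed.

Lemma perturbation_lsc : 0 <= xi -> lsc X f -> lsc X g.
Proof.
  intros Hxi Hfl u c Hlt. rewrite g_def in Hlt.
  assert (Hfu : Rbar_lt (Fin (c - p u)) (f u)).
  { destruct (f u) as [a| |]; simpl in Hlt.
    - destruct Hlt as [H1 H2]. split; [simpl in *; lra|].
      intro Q. inversion Q. apply H2. f_equal. lra.
    - split; [simpl; auto | discriminate].
    - destruct Hlt as [[] _]. }
  destruct (Rbar_lt_fin_gap _ _ Hfu) as [m [Hm Hfu']].
  destruct (Hfl u _ Hfu') as [d [Hd Hball]].
  exists (Rmin d (m / (xi + 1))). split; [apply Rmin_pos; auto; apply Rdiv_lt_0_compat; lra|].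
  intros w Hw. rewrite g_def.
  pose proof (Rmin_l d (m / (xi + 1))). pose proof (Rmin_r d (m / (xi + 1))).
  assert (Hpw : p u - p w < m).
  { pose proof (p_lipschitz w u). rewrite bnorm_sub_sym in H1.
    assert ((xi + 1) * bnorm (bsub X w u) < m); [|pose proof (bnorm_nonneg X (bsub X w u)); nra].
    apply Rmult_lt_reg_l with (/ (xi + 1)); [apply Rinv_0_lt_compat; lra|].
    replace (/ (xi + 1) * ((xi + 1) * bnorm (bsub X w u))) with (bnorm (bsub X w u))
      by (field; lra).
    unfold Rdiv in *. lra. }
  specialize (Hball w ltac:(lra)). destruct (f w) as [a| |]; simpl in *.
  - destruct Hball as [H1 _]. simpl in H1. split; [simpl; lra | intro Q; inversion Q; lra].
  - split; [simpl; auto | discriminate].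
  - destruct Hball as [H1 _]. simpl in H1. tauto.
Qed.

End Perturbation.

(* [t0] is the supremum of the [t] in [[0, 1]] with [t phi] in [S]. *)
Section SegmentExit.
Variable X : Banach.
Variable S : (X -> R) -> Prop.
Variable phi : X -> R.
Hypothesis S_int0 : d_int X S (dzero X).
Hypothesis phi_dual : is_dual X phi.
Hypothesis phi_out : ~ S phi.
Variable mp : R.
Hypothesis mp_ge0 : 0 <= mp.
Hypothesis phi_bound : forall v, Rabs (phi v) <= mp * bnorm v.

Let ray t := fun v => t * phi v.

Let ray_dual t : is_dual X (ray t).
Proof. now apply dual_scale. Qed.

Let ray_near t t' r : 0 < r -> Rabs (t - t') < r / (mp + 1) ->
  Rbar_lt (dnorm X (dsub X (ray t) (ray t'))) (Fin r).
Proof.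
  intros Hr Ht. apply Rbar_le_lt_fin with (Rabs (t - t') * mp).
  - apply dnorm_le; [apply Rmult_le_pos; auto; apply Rabs_pos|].
    intro v. unfold dsub, ray. replace (t * phi v - t' * phi v) with ((t - t') * phi v) by ring.
    rewrite Rabs_mult, Rmult_assoc. apply Rmult_le_compat_l; [apply Rabs_pos | auto].
  - apply Rle_lt_trans with (Rabs (t - t') * (mp + 1)); [pose proof (Rabs_pos (t - t')); nra|].
    apply Rmult_lt_reg_r with (/ (mp + 1)); [apply Rinv_0_lt_compat; lra|].
    replace (Rabs (t - t') * (mp + 1) * / (mp + 1)) with (Rabs (t - t')) by (field; lra).
    exact Ht.
Qed.

Let hits t := 0 <= t <= 1 /\ S (ray t).

Let hits_0 : hits 0.
Proof.
  destruct S_int0 as [_ [r0 [Hr0 Hball]]]. split; [lra|]. apply Hball; [apply ray_dual|].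
  replace (dzero X) with (ray 0)
    by (apply functional_extensionality; intro; unfold ray, dzero; ring).
  apply ray_near; auto. rewrite Rminus_0_r, Rabs_R0. apply Rdiv_lt_0_compat; lra.
Qed.

Lemma segment_exit_bd : exists t0, 0 <= t0 <= 1 /\ d_bd X S (fun v => t0 * phi v).
Proof.
  assert (Hbd : bound hits) by (exists 1; intros t [Ht _]; lra).
  destruct (completeness hits Hbd (ex_intro _ 0 hits_0)) as [t0 [Hub Hlub]].
  assert (Ht00 : 0 <= t0) by (apply Hub, hits_0).
  assert (Ht01 : t0 <= 1) by (apply Hlub; intros t [Ht _]; lra).
  exists t0. split; [lra|]. split; [split; [apply ray_dual|] |].
  - intros r Hr. assert (Hq : 0 < r / (mp + 1)) by (apply Rdiv_lt_0_compat; lra).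
    assert (Hex : exists t, hits t /\ t0 - r / (mp + 1) < t).
    { apply NNPP. intro N. assert (t0 <= t0 - r / (mp + 1)); [|lra].
      apply Hlub. intros t At. apply Rnot_lt_le. intro. apply N; eauto. }
    destruct Hex as [t [At Ht]]. pose proof (Hub t At).
    exists (ray t). split; [apply ray_dual|]. split; [apply At|].
    apply ray_near; auto. rewrite Rabs_left1; lra.
  - intros [_ [rho [Hrho Hball]]].
    assert (Hq : 0 < rho / (mp + 1)) by (apply Rdiv_lt_0_compat; lra).
    destruct (Rlt_le_dec t0 1) as [Hl|Hl].
    + set (s := t0 + Rmin (1 - t0) (rho / (2 * (mp + 1)))).
      assert (Hm1 : 0 < Rmin (1 - t0) (rho / (2 * (mp + 1))))
        by (apply Rmin_pos; [lra | apply Rdiv_lt_0_compat; lra]).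
      pose proof (Rmin_l (1 - t0) (rho / (2 * (mp + 1)))).
      pose proof (Rmin_r (1 - t0) (rho / (2 * (mp + 1)))).
      assert (rho / (2 * (mp + 1)) < rho / (mp + 1)).
      { unfold Rdiv. apply Rmult_lt_compat_l; [lra|]. apply Rinv_lt_contravar; nra. }
      assert (As : hits s).
      { split; [unfold s; lra|]. apply Hball; [apply ray_dual|].
        apply ray_near; auto. unfold s. rewrite Rabs_pos_eq; lra. }
      pose proof (Hub s As). unfold s in H2. lra.
    + apply phi_out. replace phi with (ray 1)
        by (apply functional_extensionality; intro; unfold ray; ring).
      apply Hball; [apply ray_dual|]. replace t0 with 1 by lra.
      apply ray_near; auto. rewrite Rminus_diag, Rabs_R0. exact Hq.
Qed.

End SegmentExit.

Lemma dual_ball_sub (X : Banach) (S : (X -> R) -> Prop) T phi m :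
  d_int X S (dzero X) ->
  (forall chi, is_dual X chi -> d_bd X S chi -> Rbar_le (Fin T) (dnorm X chi)) ->
  is_dual X phi -> Rbar_le (dnorm X phi) (Fin m) -> m < T -> S phi.
Proof.
  intros Hint HT Hphi Hm HmT. apply NNPP. intro NS.
  destruct (dnorm_fin X phi Hphi) as [mp [Emp [Hmp0 Bp]]].
  rewrite Emp in Hm. simpl in Hm.
  destruct (segment_exit_bd X S phi Hint Hphi NS mp Hmp0 Bp) as [t0 [Ht0 Hbd]].
  pose proof (HT _ (dual_scale X t0 phi Hphi) Hbd) as H1.
  assert (H2 : Rbar_le (dnorm X (fun v => t0 * phi v)) (Fin (t0 * mp))).
  { apply dnorm_le; [nra|]. intro v. rewrite Rabs_mult, Rabs_pos_eq by lra.
    rewrite Rmult_assoc. apply Rmult_le_compat_l; [lra | auto]. }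
  pose proof (Rbar_le_trans _ _ _ H1 H2). simpl in H. nra.
Qed.

Section LowerBounds.
Variable X : Banach.
Notation bsub := (bsub X).

Lemma Er_ge_of_ratio_bound g k : lsc X g -> (exists s, Sf X g s) ->
  (forall u a D, g u = Fin a -> 0 < a -> 0 < D ->
     (forall w, Sf X g w -> D <= bnorm (bsub w u)) -> k * D <= a) ->
  Rbar_le (Fin k) (Er X g).
Proof.
  intros Hl HS Hk. apply Rbar_inf_glb. intros r [u [Hu ->]].
  destruct (g u) as [a| |] eqn:Eu; [| simpl; auto | destruct Hu as [[] _]].
  assert (Ha : 0 < a) by (destruct Hu as [[H1|H1] H2]; auto; subst; tauto).
  destruct (dist_fin X u (Sf X g) HS) as [D [ED [_ HD]]]. rewrite ED. simpl.
  destruct (Hl u 0) as [d [Hd Hball]]; [now rewrite Eu|].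
  assert (Hfar : forall w, Sf X g w -> d <= bnorm (bsub w u)).
  { intros w Hw. apply Rnot_lt_le. intro Hlt. exact (Rbar_lt_not_le _ _ (Hball w Hlt) Hw). }
  pose proof (dist_glb X u (Sf X g) d Hfar) as HdD. rewrite ED in HdD. simpl in HdD.
  specialize (Hk u a D Eu Ha ltac:(lra) HD).
  apply Rmult_le_reg_r with D; [lra|]. replace (a / D * D) with a by (field; lra). exact Hk.
Qed.

Lemma interior_subdiff_growth f x T s : f x = Fin 0 ->
  d_int X (subdiff X f x) (dzero X) ->
  (forall chi, is_dual X chi -> d_bd X (subdiff X f x) chi -> Rbar_le (Fin T) (dnorm X chi)) ->
  0 <= s -> s < T -> forall w, Rbar_le (Fin (s * bnorm (bsub w x))) (f w).
Proof.
  intros Hx Hint HT Hs HsT w.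
  destruct (norming_functional X (bsub w x)) as [phi0 [D0 [Hb0 Hv0]]].
  assert (Sp : subdiff X f x (fun y => s * phi0 y)).
  { apply (dual_ball_sub X _ T _ s); auto; [now apply dual_scale|].
    apply dnorm_le; auto. intro y. rewrite Rabs_mult, Rabs_pos_eq by lra.
    apply Rmult_le_compat_l; auto. }
  destruct Sp as [_ [a0 [Ea0 Hsub]]]. rewrite Hx in Ea0. inversion Ea0. subst a0.
  specialize (Hsub w). now rewrite Hv0, Rplus_0_l in Hsub.
Qed.

(* The point of [[x, u]] where the affine interpolation of [g x <= 0] and
   [g u = a] vanishes lies in [S_g]. *)
Lemma convex_sublevel_point g x u gx a : convex_fun X g -> g x = Fin gx -> gx <= 0 ->
  g u = Fin a -> 0 < a ->
  exists w, Sf X g w /\ bnorm (bsub w u) = a / (a - gx) * bnorm (bsub x u).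
Proof.
  intros Hc Hx Hgx Hu Ha.
  set (t := a / (a - gx)).
  assert (Ht0 : 0 < t) by (apply Rdiv_lt_0_compat; lra).
  assert (Ht1 : t <= 1).
  { apply Rmult_le_reg_r with (a - gx); [lra|].
    unfold t. replace (a / (a - gx) * (a - gx)) with a by (field; lra). lra. }
  exists (badd (bscal t x) (bscal (1 - t) u)). split.
  - pose proof (Hc x u t gx a ltac:(lra) Hx Hu) as Cg. unfold Sf.
    replace (t * gx + (1 - t) * a) with 0 in Cg by (unfold t; field; lra). exact Cg.
  - replace (bsub (badd (bscal t x) (bscal (1 - t) u)) u) with (bscal t (bsub x u))
      by vec_eq.
    apply bnorm_scal_nonneg. lra.
Qed.

Definition pos_part (g : X -> Rbar) (w : X) : Rbar :=
  match g w with Fin y => Fin (Rmax y 0) | PInf => PInf | MInf => Fin 0 end.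

Lemma pos_part_ge0 g w : Rbar_le (Fin 0) (pos_part g w).
Proof. unfold pos_part. destruct (g w); simpl; auto; [apply Rmax_r | lra]. Qed.

Lemma pos_part_ge g w : g w <> MInf -> Rbar_le (g w) (pos_part g w).
Proof. unfold pos_part. destruct (g w); simpl; auto. intros _. apply Rmax_l. Qed.

Lemma pos_part_lsc g : (forall w, g w <> MInf) -> lsc X g -> lsc X (pos_part g).
Proof.
  intros Hm Hl w c Hc. destruct (Rlt_le_dec c 0) as [Hn|Hn].
  - exists 1. split; [lra|]. intros w' _.
    apply Rbar_lt_le_trans with (Fin 0); [split; [simpl; lra | intro Q; inversion Q; lra]|].
    apply pos_part_ge0.
  - assert (Hg : Rbar_lt (Fin c) (g w)).
    { unfold pos_part in Hc. destruct (g w) as [y| |] eqn:E; [| | now destruct (Hm w)].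
      - destruct Hc as [H1 H2]. simpl in H1. unfold Rmax in *.
        destruct (Rle_dec y 0); [destruct H1; [lra | subst; tauto]|].
        split; auto.
      - split; [simpl; auto | discriminate]. }
    destruct (Hl w c Hg) as [d [Hd Hball]]. exists d. split; auto.
    intros w' Hw'. apply Rbar_lt_le_trans with (g w');
      [exact (Hball w' Hw') | apply pos_part_ge, Hm].
Qed.

Lemma convex_cone_local_global g v av kap rho :
  convex_fun X g -> (forall w, g w <> MInf) -> g v = Fin av -> 0 < rho ->
  (forall w, bnorm (bsub w v) < rho -> Rbar_le (Fin (av - kap * bnorm (bsub w v))) (g w)) ->
  forall w, Rbar_le (Fin (av - kap * bnorm (bsub w v))) (g w).
Proof.
  intros Hc Hm Hv Hrho Hloc w.
  destruct (g w) as [bw| |] eqn:Egw; simpl; auto; [|now destruct (Hm w)].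
  set (N := bnorm (bsub w v)). pose proof (bnorm_nonneg X (bsub w v)) as HN. fold N in HN.
  set (t := Rmin 1 (rho / (2 * (N + 1)))).
  assert (Ht0 : 0 < t) by (apply Rmin_pos; [lra | apply Rdiv_lt_0_compat; lra]).
  assert (Ht1 : t <= 1) by apply Rmin_l.
  assert (Ht2 : t <= rho / (2 * (N + 1))) by apply Rmin_r.
  assert (HtN : t * N < rho).
  { apply Rle_lt_trans with (rho / (2 * (N + 1)) * N); [apply Rmult_le_compat_r; lra|].
    apply Rmult_lt_reg_r with (2 * (N + 1)); [lra|].
    replace (rho / (2 * (N + 1)) * N * (2 * (N + 1))) with (rho * N) by (field; lra). nra. }
  set (wt := badd (bscal t w) (bscal (1 - t) v)).
  assert (Nwt : bnorm (bsub wt v) = t * N).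
  { replace (bsub wt v) with (bscal t (bsub w v)) by (unfold wt; vec_eq).
    apply bnorm_scal_nonneg. lra. }
  pose proof (Hc w v t bw av ltac:(lra) Egw Hv) as Cg. fold wt in Cg.
  pose proof (Hloc wt ltac:(lra)) as Lw. rewrite Nwt in Lw.
  destruct (g wt); simpl in Cg, Lw; try tauto.
  apply Rmult_le_reg_l with t; [lra|]. nra.
Qed.

Lemma pos_part_pos g w : Rbar_lt (Fin 0) (g w) -> pos_part g w = g w.
Proof.
  unfold pos_part. destruct (g w) as [y| |]; intros [H1 H2]; simpl in *; try tauto.
  f_equal. apply Rmax_left. destruct H1; [lra | subst; tauto].
Qed.

(* Ekeland's principle for the positive part of [g], started at [u]; the point
   it returns is within [a / kap < D] of [u], hence outside [S_g]. *)
Lemma convex_cone_minorant_point g u a kap D :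
  convex_fun X g -> (forall w, g w <> MInf) -> lsc X g ->
  g u = Fin a -> 0 < a -> 0 < kap -> a < kap * D ->
  (forall w, Sf X g w -> D <= bnorm (bsub w u)) ->
  exists v av, g v = Fin av /\ 0 < av /\
    forall w, Rbar_le (Fin (av - kap * bnorm (bsub w v))) (g w).
Proof.
  intros Hc Hm Hl Hu Ha Hk HkD HD.
  assert (hu : pos_part g u = Fin a)
    by (unfold pos_part; rewrite Hu; f_equal; apply Rmax_left; lra).
  destruct (ekeland X (pos_part g) u a kap (pos_part_ge0 g) (pos_part_lsc g Hm Hl) hu Hk)
    as [v [av [Ehv [Hav Hmin]]]].
  assert (Hav0 : 0 <= av) by (pose proof (pos_part_ge0 g v) as H; now rewrite Ehv in H).
  assert (NSv : ~ Sf X g v).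
  { intro Sv. pose proof (HD v Sv). pose proof (bnorm_nonneg X (bsub v u)). nra. }
  assert (Hpos : Rbar_lt (Fin 0) (g v)).
  { unfold Sf in NSv. destruct (g v) as [y| |]; simpl in *; [| | now destruct (Hm v)].
    - split; [simpl; lra | intro Q; inversion Q; subst; apply NSv; lra].
    - split; [simpl; auto | discriminate]. }
  rewrite (pos_part_pos g v Hpos) in Ehv.
  exists v, av. split; auto. split; [rewrite Ehv in Hpos; destruct Hpos as [[H|H] H']; auto;
                                     subst; tauto|].
  destruct (Hl v 0 Hpos) as [rho [Hrho Hball]].
  apply (convex_cone_local_global g v av kap rho Hc Hm Ehv Hrho).
  intros w Hw. rewrite <- (pos_part_pos g w (Hball w Hw)). apply Hmin.
Qed.

End LowerBounds.

Section PtbLowerBound.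
Variable X : Banach.
Notation bsub := (bsub X).
Variables (f g : X -> Rbar) (p : X -> R) (x : X) (xi b e : R).
Hypothesis f_nMInf : forall w, f w <> MInf.
Hypothesis f_convex : convex_fun X f.
Hypothesis f_lsc : lsc X f.
Hypothesis p_convex : convex_real X p.
Hypothesis g_def : forall u, g u = Rbar_plus_R (f u) (p u).
Hypothesis g_S : exists s, Sf X g s.
Hypothesis f_x : f x = Fin 0.
Hypothesis xi_ge0 : 0 <= xi.
Hypothesis p_lipschitz_at : forall u, Rabs (p u - p x) <= xi * bnorm (bsub u x).
Hypothesis e_lt_b : e < b.
Hypothesis tau_ge : Rbar_le (Fin (b + xi - e)) (tau X f x xi (Rabs (p x))).

Let p_lipschitz := convex_lipschitz_of_lipschitz_at X p x xi xi_ge0 p_convex p_lipschitz_at.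

Let p_ge u : p x - xi * bnorm (bsub u x) <= p u.
Proof. pose proof (p_lipschitz u x). rewrite bnorm_sub_sym in H. lra. Qed.

Let f_of_g u a : g u = Fin a -> f u = Fin (a - p u).
Proof. intro H. apply Rbar_plus_R_fin. now rewrite <- g_def. Qed.

Lemma Ptb_ratio_bound_interior : d_int X (subdiff X f x) (dzero X) ->
  forall u a D, g u = Fin a -> 0 < a -> 0 < D ->
  (forall w, Sf X g w -> D <= bnorm (bsub w u)) -> (b - e) / 2 * D <= a.
Proof.
  intros Hint u a D Hu Ha HD0 HD.
  assert (HT : forall chi, is_dual X chi -> d_bd X (subdiff X f x) chi ->
                 Rbar_le (Fin (b + xi - e)) (dnorm X chi)).
  { intros chi Hchi Hbd. eapply Rbar_le_trans; [exact tau_ge|].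
    unfold tau. destruct excluded_middle_informative; [|contradiction].
    apply Rbar_inf_lb. eauto. }
  pose proof (interior_subdiff_growth X f x _ (xi + (b - e) / 2) f_x Hint HT
                ltac:(lra) ltac:(lra)) as growth.
  assert (Hpx : p x <= 0).
  { destruct g_S as [s0 Hs0]. unfold Sf in Hs0. rewrite g_def in Hs0.
    pose proof (growth s0) as G. pose proof (p_ge s0).
    pose proof (bnorm_nonneg X (bsub s0 x)).
    destruct (f s0); simpl in Hs0, G; try tauto. nra. }
  pose proof (growth u) as G. rewrite (f_of_g u a Hu) in G. simpl in G.
  pose proof (p_ge u).
  assert (Hstar : (b - e) / 2 * bnorm (bsub u x) <= a - p x) by nra.
  assert (Hgx : g x = Fin (0 + p x)) by (now rewrite g_def, f_x).
  destruct (convex_sublevel_point X g x u (0 + p x) a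
              (perturbation_convex X f g p g_def f_convex p_convex) Hgx ltac:(lra) Hu Ha)
    as [w [Sw Hw]].
  specialize (HD w Sw). rewrite Hw, bnorm_sub_sym in HD.
  apply Rle_trans with (a / (a - p x) * ((b - e) / 2 * bnorm (bsub u x))).
  - replace (0 + p x) with (p x) in HD by ring.
    assert ((b - e) / 2 * D <= (b - e) / 2 * (a / (a - p x) * bnorm (bsub u x)))
      by (apply Rmult_le_compat_l; lra).
    lra.
  - apply Rle_trans with (a / (a - p x) * (a - p x)).
    + apply Rmult_le_compat_l; auto. apply Rlt_le, Rdiv_lt_0_compat; lra.
    + right. field. lra.
Qed.

Lemma Ptb_ratio_bound_noninterior : ~ d_int X (subdiff X f x) (dzero X) ->
  forall u a D, g u = Fin a -> 0 < a -> 0 < D ->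
  (forall w, Sf X g w -> D <= bnorm (bsub w u)) -> (b - e) / 2 * D <= a.
Proof.
  intros Hnint u a D Hu Ha HD0 HD.
  assert (HT : forall v phi, Rbar_le (Fin (- xi * bnorm (bsub v x) - Rabs (p x))) (f v) ->
                 subdiff X f v phi -> Rbar_le (Fin (b + xi - e)) (dnorm X phi)).
  { intros v phi Hv Hs. eapply Rbar_le_trans; [exact tau_ge|].
    unfold tau. destruct excluded_middle_informative; [contradiction|].
    eapply Rbar_le_trans; [apply Rbar_inf_lb; exists v; split; [exact Hv | reflexivity]|].
    apply Rbar_inf_lb. exists phi. split; [apply Hs|]. split; auto. }
  apply Rnot_lt_le. intro Hlt.
  set (kap := (a / D + (b - e) / 2) / 2).
  assert (HaD : a / D * D = a) by (field; lra).
  assert (HaD' : a / D < (b - e) / 2).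
  { apply Rmult_lt_reg_r with D; auto. lra. }
  assert (Hk0 : 0 < kap) by (unfold kap; pose proof (Rdiv_lt_0_compat a D Ha HD0); lra).
  assert (HkD : a < kap * D) by (unfold kap; nra).
  destruct (convex_cone_minorant_point X g u a kap D
              (perturbation_convex X f g p g_def f_convex p_convex)
              (perturbation_nMInf X f g p f_nMInf g_def)
              (perturbation_lsc X f g p xi p_lipschitz g_def xi_ge0 f_lsc)
              Hu Ha Hk0 HkD HD) as [v [av [Egv [Hav Hcone]]]].
  pose proof (f_of_g v av Egv) as Efv.
  assert (Fcone : forall w, Rbar_le (Fin ((av - p v) - (kap + xi) * bnorm (bsub w v))) (f w)).
  { intro w. pose proof (Hcone w) as Gw. rewrite g_def in Gw. pose proof (p_lipschitz v w).
    destruct (f w) as [fw| |]; simpl in *; auto. lra. }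
  destruct (subgradient_of_cone_minorant X f v (av - p v) (kap + xi) f_convex f_nMInf Efv
              ltac:(lra) Fcone) as [phi [Hpd [Hpb Hps]]].
  assert (Hin : Rbar_le (Fin (- xi * bnorm (bsub v x) - Rabs (p x))) (f v)).
  { rewrite Efv. simpl. pose proof (p_lipschitz_at v). pose proof (Rle_abs (p v - p x)).
    pose proof (Rle_abs (p x)). lra. }
  pose proof (HT v phi Hin (conj Hpd (ex_intro _ (av - p v) (conj Efv Hps)))) as H1.
  assert (H2 : Rbar_le (dnorm X phi) (Fin (kap + xi))) by (apply dnorm_le; auto; lra).
  pose proof (Rbar_le_trans _ _ _ H1 H2) as H3. simpl in H3. unfold kap in H3. lra.
Qed.

Lemma Ptb_Er_ge : Rbar_le (Fin ((b - e) / 2)) (Er X g).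
Proof.
  apply Er_ge_of_ratio_bound; auto.
  - exact (perturbation_lsc X f g p xi p_lipschitz g_def xi_ge0 f_lsc).
  - destruct (classic (d_int X (subdiff X f x) (dzero X))).
    + now apply Ptb_ratio_bound_interior.
    + now apply Ptb_ratio_bound_noninterior.
Qed.

End PtbLowerBound.

Lemma bd_mod_le_thr_Ptb (X : Banach) f : Gamma0 X f -> Rbar_le (bd_mod X f) (thr X (Ptb X f)).
Proof.
  intros [[Hfm _] [Hfc Hfl]]. apply Rbar_inf_glb. intros a [e [He [HE ->]]].
  destruct (bd_mod X f) as [b| |] eqn:Eb; simpl; auto.
  - apply Rnot_lt_le. intro Hlt.
    assert (H : Rbar_le (Fin ((b - e) / 2)) (ErFam X (Ptb X f e))).
    { apply Rbar_inf_glb. intros a' [g [Hg ->]].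
      destruct Hg as [HS [p [Hpc [Hgp [x [xi [Hx [Hxi [Hdiff Hlip]]]]]]]]].
      rewrite Eb in Hdiff. apply Rbar_diff_le_fin in Hdiff.
      eapply Ptb_Er_ge; eauto. }
    rewrite HE in H. simpl in H. lra.
  - unfold ErFam in HE. rewrite Rbar_inf_empty in HE; [discriminate|].
    intros a' [g [Hg _]]. destruct Hg as [_ [p [_ [_ [x [xi [_ [_ [Hdiff _]]]]]]]]].
    rewrite Eb in Hdiff. simpl in Hdiff.
    destruct (tau X f x xi (Rabs (p x))); simpl in Hdiff; tauto.
Qed.

Theorem mainTheorem8 (X : Banach) (f : X -> Rbar)
  (hf : Gamma0 X f) (hS : exists x, Sf X f x) :
  (Rbar_le (thr X (Ptbw X f)) (thr X (Ptbwl X f)) /\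
   Rbar_le (thr X (Ptbwl X f)) (bd_mod X f)) /\
  (Rbar_le (bd_mod X f) (thr X (Ptb X f)) /\
   Rbar_le (thr X (Ptb X f)) (thr X (Ptbl X f))).
Proof.
  split; split.
  - apply thr_mono. intros e g _. apply Ptbwl_Ptbw.
  - apply thr_Ptbwl_le_bd_mod, hf.
  - now apply bd_mod_le_thr_Ptb.
  - apply thr_mono. intros e g _. apply Ptbl_Ptb.
Qed.
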